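(* Assume $\Phi$ and $x$ satisfy (P1)–(P4) and (P6) as in the context, let $\delta>0$, $\bar{\mathcal{K}}=\mathcal{K}_{d/2}\setminus X^{-1}(\mathcal{C}_{x,\delta/2})$, and let $r\in(0,d/2]$ and $R_{-1}<\infty$ be such that for every $(t,z_0)\in\bar{\mathcal{K}}$ one has $\bar{\mathcal{B}}_r(z_0)\subset K_d$ and $\sup_{z\in\mathcal{B}_r(z_0)}|J(t,z)^{-1}|\le R_{-1}$. Then there exist $R_3<\infty$, $w_a>0$ and, for each $(t,z_0)\in\bar{\mathcal{K}}$, a matrix $A(t,z_0)\in\mathbb{C}^{n\times n}$ whose imaginary part is symmetric and satisfies $\Im A(t,z_0)\ge w_aI$ (in the sense of quadratic forms), such that for all $(t,z_0)\in\bar{\mathcal{K}}$ and $z\in\mathcal{B}_{r/2}(z_0)$, with $y_0=x(t,z_0)$, $$\Big|\Phi(t,y_0-x(t,z),z)-\Big(\Phi(t,0,z_0)+\tfrac12(z-z_0)^TA(t,z_0)(z-z_0)\Big)\Big|\le R_3|z-z_0|^3.$$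
   Context: Fix $n\ge1$, $T>0$, compact $K_0\subset\mathbb{R}^n$, $d>0$, $\eta\in(0,\infty]$; $K_{d''}=\{z:\operatorname{dist}(z,K_0)\le d''\}$, $\mathcal{K}_{d''}=[0,T]\times K_{d''}$; $J(t,z)=D_zx(t,z)$. Hypotheses: (P1) $x\in C^\infty([0,T]\times\mathbb{R}^n;\mathbb{R}^n)$. (P2) $\Phi\in C^\infty([0,T]\times\mathbb{R}^n\times\mathbb{R}^n;\mathbb{C})$. (P3) $\nabla_y\Phi(t,0,z)$ is real and there is $C>0$ with $|\nabla_y\Phi(t,0,z)-\nabla_y\Phi(t,0,z')|+|x(t,z)-x(t,z')|\ge C|z-z'|$ for $t\in[0,T]$, $z,z'\in K_d$. (P4) There is $w_4>0$ with $\Im\Phi(t,y,z)\ge w_4|y|^2$ for $t\in[0,T]$, $z\in K_d$, $|y|\le2\eta$ (all $y$ if $\eta=\infty$). (P6) $\Phi(t,0,z)$ and $\nabla_y\Phi(t,0,z)$ are real and $J(t,z)^T\nabla_y\Phi(t,0,z)=\nabla_z[\Phi(t,0,z)]$ for all $t\in[0,T]$, $z\in\mathbb{R}^n$. Caustic set $\mathcal{C}_x=\{(t,y)\in[0,T]\times\mathbb{R}^n:\exists z\in K_d\text{ with }y=x(t,z),\ \det J(t,z)=0\}$, $\mathcal{C}_{x,\delta}=\{(t,y):\operatorname{dist}((t,y),\mathcal{C}_x)<\delta\}$; $X(t,z)=(t,x(t,z))$ and $X^{-1}(\mathcal{C}_{x,\delta'})=\{(t,z)\in\mathcal{K}_d:(t,x(t,z))\in\mathcal{C}_{x,\delta'}\}$.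 $\mathcal{B}_r(z)$ is the open ball of radius $r$ about $z$. *)

From mathcomp Require Import ssreflect ssrfun ssrbool eqtype ssrnat seq fintype bigop.
From mathcomp Require Import fingroup perm.
From Stdlib Require Import Reals.
Open Scope R_scope.

Definition vec (n : nat) := 'I_n -> R.
Definition mat (n : nat) := 'I_n -> 'I_n -> R.

Definition vzero {n} : vec n := fun _ => 0.
Definition vadd {n} (u v : vec n) : vec n := fun i => u i + v i.
Definition vsub {n} (u v : vec n) : vec n := fun i => u i - v i.
Definition vscale {n} (a : R) (v : vec n) : vec n := fun i => a * v i.
Definition basis {n} (j : 'I_n) : vec n := fun i => if i == j then 1 else 0.
Definition dot {n} (u v : vec n) : R := \big[Rplus/0]_(i < n) (u i * v i).
Definition vnorm {n} (v : vec n) : R := sqrt (dot v v).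
(* Euclidean norm of a complex vector given by its real and imaginary parts *)
Definition cvnorm {n} (a b : vec n) : R := sqrt (dot a a + dot b b).
(* modulus of the complex number a + i b *)
Definition cabs (a b : R) : R := sqrt (a ^ 2 + b ^ 2).

Definition mulmv {n} (M : mat n) (v : vec n) : vec n :=
  fun i => \big[Rplus/0]_(j < n) (M i j * v j).
Definition qform {n} (M : mat n) (v : vec n) : R := dot v (mulmv M v).
Definition mmul {n} (M N : mat n) : mat n :=
  fun i k => \big[Rplus/0]_(j < n) (M i j * N j k).
Definition idmat {n} : mat n := fun i j => if i == j then 1 else 0.
Definition mat_symmetric {n} (M : mat n) : Prop := forall i j, M i j = M j i.
Definition det {n} (M : mat n) : R :=
  \big[Rplus/0]_(s : {perm 'I_n})
     ((-1) ^ (nat_of_bool (odd_perm s)) * \big[Rmult/1]_(i < n) M i (s i)).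
Definition inv_norm_le {n} (M : mat n) (Rb : R) : Prop :=
  exists Minv : mat n, mmul Minv M = idmat /\ mmul M Minv = idmat /\
    forall v : vec n, vnorm (mulmv Minv v) <= Rb * vnorm v.

(* packing of (t, z) in R^(1+N) and of (y, z) in R^(n+n) *)
Definition vcons {N} (t : R) (z : vec N) : vec N.+1 :=
  fun i => match unlift ord0 i with Some j => z j | None => t end.
Definition vfst {n} (w : vec (n + n)) : vec n := fun j => w (lshift n j).
Definition vsnd {n} (w : vec (n + n)) : vec n := fun j => w (rshift n j).

Definition continuous_vec {N} (F : vec N -> R) : Prop :=
  forall z eps, 0 < eps -> exists del, 0 < del /\
    forall w, vnorm (vsub w z) < del -> Rabs (F w - F z) < eps.
Fixpoint Ck (k : nat) {N} (F : vec N -> R) : Prop :=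
  match k with
  | O => continuous_vec F
  | S k' => continuous_vec F /\
      forall j : 'I_N, exists G : vec N -> R,
        (forall z, derivable_pt_lim (fun h => F (vadd z (vscale h (basis j)))) 0 (G z))
        /\ Ck k' G
  end.
Definition smooth {N} (F : vec N -> R) : Prop := forall k, Ck k F.
(* C^infinity on [0,T] x R^N : restriction of a smooth function on R^(1+N) *)
Definition smooth_strip (T : R) {N} (F : R -> vec N -> R) : Prop :=
  exists G : vec N.+1 -> R, smooth G /\
    forall t z, 0 <= t <= T -> G (vcons t z) = F t z.

Definition seq_compact {n} (K : vec n -> Prop) : Prop :=
  forall s : nat -> vec n, (forall k, K (s k)) ->
    exists (phi : nat -> nat) (l : vec n),
      (forall k, (phi k < phi (S k))%nat) /\ K l /\
      forall eps, 0 < eps -> exists M, forall k, (M <= k)%nat ->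
        vnorm (vsub (s (phi k)) l) < eps.

(* K_{d''} = { z : dist(z, K0) <= d'' }, dist being the infimum *)
Definition inK {n} (K0 : vec n -> Prop) (d'' : R) (z : vec n) : Prop :=
  forall eps, 0 < eps -> exists k, K0 k /\ vnorm (vsub z k) < d'' + eps.

(* |y| <= 2 eta, with eta = None meaning eta = infinity *)
Definition within_eta {n} (eta : option R) (y : vec n) : Prop :=
  match eta with None => True | Some e => vnorm y <= 2 * e end.

Definition in_Cx {n} (T : R) (K0 : vec n -> Prop) (d : R)
  (x : R -> vec n -> vec n) (J : R -> vec n -> mat n) (t : R) (y : vec n) : Prop :=
  0 <= t <= T /\ exists z, inK K0 d z /\ y = x t z /\ det (J t z) = 0.
Definition in_Cxd {n} (T : R) (K0 : vec n -> Prop) (d : R)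
  (x : R -> vec n -> vec n) (J : R -> vec n -> mat n) (del : R)
  (t : R) (y : vec n) : Prop :=
  exists t' y', in_Cx T K0 d x J t' y' /\
    sqrt ((t - t') ^ 2 + dot (vsub y y') (vsub y y')) < del.
(* Kbar = calK_{d/2} \ X^{-1}(C_{x,delta/2}) *)
Definition in_Kbar {n} (T : R) (K0 : vec n -> Prop) (d : R)
  (x : R -> vec n -> vec n) (J : R -> vec n -> mat n) (delta : R)
  (t : R) (z0 : vec n) : Prop :=
  (0 <= t <= T /\ inK K0 (d / 2) z0) /\
  ~ ((0 <= t <= T /\ inK K0 d z0) /\ in_Cxd T K0 d x J (delta / 2) t (x t z0)).

From HB Require Import structures.
From mathcomp Require Import ssreflect ssrfun ssrbool eqtype ssrnat seq fintype bigop.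
From Stdlib Require Import Reals Lra Psatz.
From Stdlib Require Import FunctionalExtensionality ClassicalEpsilon Classical.
Open Scope R_scope.
Set Warnings "-notation-overridden,-redundant-canonical-projection".

(* Put [F(v) = Phi(t, x(t,z0) - x(t,z0+v), z0+v)].  Second-order Taylor formulas for
   [x] at [(t,z0)] and for [Phi] at [(t,0,z0)], with third derivatives bounded
   uniformly on a compact neighbourhood of the relevant points, expand [F(v)] up to
   [O(|v|^3)].  Its linear part [nabla_z Phi . v - nabla_y Phi . (J v)] vanishes by
   (P6), and its quadratic part defines [A(t,z0)]; symmetrizing [Im A] does not
   change the quadratic form.  Coercivity comes from (P4): along [z = z0 + s v] the
   point [y = x(t,z0) - x(t,z)] is [-s J v + O(s^2)], so
   [w4 s^2 |J v|^2 <= Im F(s v) = s^2 v^T (Im A) v / 2 + O(s^3)],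
   and [|v| <= R_{-1} |J v|]. *)

Lemma Rplus_assoc' : associative Rplus. Proof. by move=> *; rewrite Rplus_assoc. Qed.
Lemma Rmult_assoc' : associative Rmult. Proof. by move=> *; rewrite Rmult_assoc. Qed.
HB.instance Definition _ := Monoid.isComLaw.Build R 0 Rplus Rplus_assoc' Rplus_comm Rplus_0_l.
HB.instance Definition _ := Monoid.isComLaw.Build R 1 Rmult Rmult_assoc' Rmult_comm Rmult_1_l.
HB.instance Definition _ := Monoid.isMulLaw.Build R 0 Rmult Rmult_0_l Rmult_0_r.
HB.instance Definition _ :=
  Monoid.isAddLaw.Build R Rmult Rplus Rmult_plus_distr_r Rmult_plus_distr_l.

Ltac vext := apply: functional_extensionality => ?; rewrite /vadd /vscale /vsub /vzero.

Lemma sum_le {I : Type} (r : seq I) (F G : I -> R) :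
  (forall i, F i <= G i) -> \big[Rplus/0]_(i <- r) F i <= \big[Rplus/0]_(i <- r) G i.
Proof. move=> H; apply: (big_ind2 (fun a b => a <= b)) => //; [lra | move=> *; lra]. Qed.

Lemma Rabs_sum_le {I : Type} (r : seq I) (F : I -> R) :
  Rabs (\big[Rplus/0]_(i <- r) F i) <= \big[Rplus/0]_(i <- r) Rabs (F i).
Proof.
apply: (big_ind2 (fun a b => Rabs a <= b)); first by rewrite Rabs_R0; lra.
- by move=> a b c d H1 H2; apply: Rle_trans (Rabs_triang _ _) _; lra.
- by move=> i _; lra.
Qed.

Lemma sum_ge0 {I : Type} (r : seq I) (P : pred I) (F : I -> R) :
  (forall i, 0 <= F i) -> 0 <= \big[Rplus/0]_(i <- r | P i) F i.
Proof. move=> H; apply: (big_ind (fun a => 0 <= a)) => //; [lra | move=> *; lra]. Qed.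

Lemma sum_const n c : \big[Rplus/0]_(i < n) c = INR n * c.
Proof.
elim: n => [|n IH]; first by rewrite big_ord0 /=; ring.
by rewrite big_ord_recr IH S_INR /=; ring.
Qed.

Lemma sum_basisl n (v : vec n) i : \big[Rplus/0]_(j < n) (basis j i * v j) = v i.
Proof.
rewrite (bigD1 i) //= /basis eqxx big1 /=; first ring.
by move=> j hj; rewrite eq_sym (negbTE hj); ring.
Qed.

Definition norm1 {n} (v : vec n) : R := \big[Rplus/0]_(i < n) Rabs (v i).

Lemma norm1_ge0 n (v : vec n) : 0 <= norm1 v.
Proof. by apply: sum_ge0 => i; exact: Rabs_pos. Qed.

Lemma Rabs_le_norm1 n (v : vec n) i : Rabs (v i) <= norm1 v.
Proof.
rewrite /norm1 (bigD1 i) //= -{1}(Rplus_0_r (Rabs (v i))).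
by apply: Rplus_le_compat_l; apply: sum_ge0 => j; exact: Rabs_pos.
Qed.

Lemma norm1_le n (u : vec n) c : (forall i, Rabs (u i) <= c) -> norm1 u <= INR n * c.
Proof. by move=> H; rewrite /norm1 -sum_const; exact: sum_le. Qed.

Lemma norm1_add n (a b : vec n) : norm1 (vadd a b) <= norm1 a + norm1 b.
Proof. by rewrite /norm1 -big_split; apply: sum_le => i; exact: Rabs_triang. Qed.

Lemma norm1_sub n (a b : vec n) : norm1 (vsub a b) <= norm1 a + norm1 b.
Proof.
rewrite /norm1 -big_split; apply: sum_le => i; rewrite /vsub /=.
by apply: Rle_trans (Rabs_triang _ _) _; rewrite Rabs_Ropp; lra.
Qed.

Lemma norm1_scale n c (a : vec n) : norm1 (vscale c a) = Rabs c * norm1 a.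
Proof. by rewrite /norm1 big_distrr; apply: eq_bigr => i _; exact: Rabs_mult. Qed.

Lemma norm1_opp n (a : vec n) : norm1 (vscale (-1) a) = norm1 a.
Proof. by rewrite norm1_scale Rabs_Ropp Rabs_R1 Rmult_1_l. Qed.

Lemma norm1_zero n : norm1 (@vzero n) = 0.
Proof. by rewrite /norm1 big1 // => i _; rewrite Rabs_R0. Qed.

Lemma norm1_basis n (j : 'I_n) : norm1 (basis j) = 1.
Proof.
rewrite /norm1 (bigD1 j) //= /basis eqxx Rabs_R1 big1 /=; first ring.
by move=> i /negbTE ->; rewrite Rabs_R0.
Qed.

Lemma dot_ge0 n (v : vec n) : 0 <= dot v v.
Proof. by apply: sum_ge0 => i; nra. Qed.

Lemma dot_le_norm1_sqr n (v : vec n) : dot v v <= norm1 v * norm1 v.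
Proof.
rewrite /dot /norm1; elim: n v => [|n IH] v; first by rewrite !big_ord0; lra.
rewrite !big_ord_recr /=.
have := IH (fun i => v (widen_ord (leqnSn n) i)).
have := sum_ge0 (index_enum 'I_n) xpredT
  (fun i => Rabs (v (widen_ord (leqnSn n) i))) (fun i => Rabs_pos _).
have := Rabs_pos (v ord_max).
set S := \big[Rplus/0]_(i < n) _. set Q := \big[Rplus/0]_(i < n) _.
move=> h1 h2 h3.
have : v ord_max * v ord_max = Rabs (v ord_max) * Rabs (v ord_max).
  by rewrite -Rabs_mult Rabs_right //; nra.
nra.
Qed.

Lemma vnorm_ge0 n (v : vec n) : 0 <= vnorm v.
Proof. exact: sqrt_pos. Qed.

Lemma vnorm_le_norm1 n (v : vec n) : vnorm v <= norm1 v.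
Proof.
rewrite /vnorm -(sqrt_square (norm1 v)); last exact: norm1_ge0.
by apply: sqrt_le_1_alt; exact: dot_le_norm1_sqr.
Qed.

Lemma Rabs_le_vnorm n (v : vec n) i : Rabs (v i) <= vnorm v.
Proof.
rewrite /vnorm -sqrt_Rsqr_abs; apply: sqrt_le_1_alt.
rewrite /dot (bigD1 i) //= /Rsqr -{1}(Rplus_0_r (v i * v i)).
by apply: Rplus_le_compat_l; apply: sum_ge0 => j; nra.
Qed.

Lemma norm1_le_vnorm n (v : vec n) : norm1 v <= INR n * vnorm v.
Proof. by apply: norm1_le => i; exact: Rabs_le_vnorm. Qed.

Lemma dot_vnorm n (v : vec n) : dot v v = vnorm v ^ 2.
Proof. by rewrite /vnorm /= Rmult_1_r sqrt_sqrt //; exact: dot_ge0. Qed.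

Lemma vnorm_zero n : vnorm (@vzero n) = 0.
Proof. by rewrite /vnorm /dot big1 ?sqrt_0 // => i _; rewrite /vzero; ring. Qed.

Lemma vsub_diag n (z : vec n) : vsub z z = vzero.
Proof. by vext; ring. Qed.

Lemma vadd_vsub n (z0 z : vec n) : vadd z0 (vsub z z0) = z.
Proof. by vext; ring. Qed.

Lemma vsub_vadd_l n (z0 u : vec n) : vsub (vadd z0 u) z0 = u.
Proof. by vext; ring. Qed.

Lemma vadd_vsubK n (a b : vec n) : vadd (vsub a b) b = a.
Proof. by vext; ring. Qed.

Lemma dotC n (a b : vec n) : dot a b = dot b a.
Proof. by apply: eq_bigr => i _; ring. Qed.

Lemma dot_addr n (D a b : vec n) : dot D (vadd a b) = dot D a + dot D b.
Proof. by rewrite /dot -big_split; apply: eq_bigr => i _ /=; rewrite /vadd; ring. Qed.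

Lemma dot_scaler n (D a : vec n) c : dot D (vscale c a) = c * dot D a.
Proof. by rewrite /dot big_distrr; apply: eq_bigr => i _ /=; rewrite /vscale; ring. Qed.

Lemma dot_scalel n (f v : vec n) c : dot (fun k => c * f k) v = c * dot f v.
Proof. by rewrite /dot big_distrr; apply: eq_bigr => i _ /=; ring. Qed.

Lemma dot_mulr n (D v : vec n) c : dot D v * c = dot (fun l => D l * c) v.
Proof. by rewrite /dot big_distrl /=; apply: eq_bigr => i _; ring. Qed.

Lemma dot_subl n (f g v : vec n) : dot (fun j => f j - g j) v = dot f v - dot g v.
Proof.
apply: (Rplus_eq_reg_r (dot g v)); rewrite /Rminus Rplus_assoc Rplus_opp_l Rplus_0_r.
by rewrite /dot -big_split; apply: eq_bigr => i _ /=; ring.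
Qed.

Lemma dot_subr n (D a b : vec n) : dot D (vsub a b) = dot D a - dot D b.
Proof. by rewrite dotC (dotC _ D a) (dotC _ D b); exact: dot_subl. Qed.

Lemma dot_basisr n (D : vec n) j : dot D (basis j) = D j.
Proof.
rewrite /dot (bigD1 j) //= /basis eqxx big1 /=; first ring.
by move=> i /negbTE ->; ring.
Qed.

Lemma dot0r n (D : vec n) : dot D (fun _ => 0) = 0.
Proof. by rewrite /dot big1 // => i _; ring. Qed.

Lemma dot_le n (D v : vec n) K :
  (forall i, Rabs (D i) <= K) -> Rabs (dot D v) <= K * norm1 v.
Proof.
move=> HD; apply: Rle_trans (Rabs_sum_le _ _) _.
rewrite /norm1 big_distrr; apply: sum_le => i; rewrite Rabs_mult.
by apply: Rmult_le_compat_r; [exact: Rabs_pos | exact: HD].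
Qed.

Lemma dot_suml n {I : finType} (F : I -> vec n) (v : vec n) :
  dot (fun l => \big[Rplus/0]_(k : I) F k l) v = \big[Rplus/0]_(k : I) dot (F k) v.
Proof.
rewrite /dot (eq_bigr (fun l => \big[Rplus/0]_(k : I) (F k l * v l))); last first.
  by move=> l _; rewrite big_distrl.
by rewrite (exchange_big_dep xpredT).
Qed.

Lemma dot_comp n K (D : vec K) (M : 'I_K -> 'I_n -> R) (w : vec K) (v : vec n) :
  (forall k, w k = \big[Rplus/0]_(j < n) (M k j * v j)) ->
  dot D w = dot (fun j => \big[Rplus/0]_(k < K) (D k * M k j)) v.
Proof.
move=> Hw; rewrite /dot.
under eq_bigr => k _ do rewrite Hw big_distrr /=.
rewrite exchange_big /=; apply: eq_bigr => j _.
by rewrite big_distrl /=; apply: eq_bigr => k _; ring.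
Qed.

Lemma dot_mulmv n (M : mat n) (D v : vec n) :
  dot D (mulmv M v) = dot (fun j => \big[Rplus/0]_(i < n) (M i j * D i)) v.
Proof.
rewrite (dot_comp _ _ D M (mulmv M v) v) //.
by apply: eq_bigr => j _; congr (_ * _); apply: eq_bigr => i _; ring.
Qed.

Definition bil {n} (H : mat n) (a b : vec n) : R := dot (fun j => dot (H j) b) a.

Lemma qform_bil n (M : mat n) v : qform M v = bil M v v.
Proof. by rewrite /qform /bil /dot /mulmv; apply: eq_bigr => i _ /=; ring. Qed.

Lemma bil_le n (H : mat n) a b K :
  (forall j k, Rabs (H j k) <= K) -> Rabs (bil H a b) <= K * norm1 a * norm1 b.
Proof.
move=> HK; apply: Rle_trans (Rabs_sum_le _ _) _.
rewrite /norm1 Rmult_assoc (Rmult_comm (\big[Rplus/0]_(i < n) _)) -Rmult_assoc.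
rewrite big_distrr; apply: sum_le => j; rewrite Rabs_mult.
by apply: Rmult_le_compat_r; [exact: Rabs_pos | exact: dot_le].
Qed.

Lemma bil_sub_diag_le n (H : mat n) a b K :
  (forall j k, Rabs (H j k) <= K) ->
  Rabs (bil H a a - bil H b b) <= K * norm1 (vsub a b) * (norm1 a + norm1 b).
Proof.
move=> HK.
have E1 : bil H a a - bil H b a = bil H (vsub a b) a by rewrite /bil dot_subr.
have E2 : bil H b a - bil H b b = bil H b (vsub a b).
  rewrite /bil -dot_subl; congr (dot _ b).
  by apply: functional_extensionality => j; rewrite dot_subr.
have -> : bil H a a - bil H b b = bil H (vsub a b) a + bil H b (vsub a b)
  by rewrite -E1 -E2; ring.
apply: Rle_trans (Rabs_triang _ _) _.
have := bil_le _ H (vsub a b) a K HK; have := bil_le _ H b (vsub a b) K HK.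
nra.
Qed.

Lemma bil_subm n (A1 A2 : mat n) v :
  bil (fun j k => A1 j k - A2 j k) v v = bil A1 v v - bil A2 v v.
Proof.
rewrite /bil -dot_subl; congr (dot _ v).
by apply: functional_extensionality => j; exact: dot_subl.
Qed.

Lemma bil_sum n (c : vec n) (X : 'I_n -> mat n) v :
  bil (fun j k => \big[Rplus/0]_(i < n) (c i * X i j k)) v v = dot c (fun i => bil (X i) v v).
Proof.
rewrite /bil {1}/dot.
rewrite (eq_bigr (fun j => \big[Rplus/0]_(i < n) (c i * dot (X i j) v * v j))); last first.
  move=> j _; rewrite dot_suml big_distrl; apply: eq_bigr => i _ /=.
  by rewrite dot_scalel.
rewrite (exchange_big_dep xpredT) //= /dot; apply: eq_bigr => i _.
by rewrite big_distrr /=; apply: eq_bigr => j _; ring.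
Qed.

Lemma bil_comp n K (H : 'I_K -> 'I_K -> R) (M : 'I_K -> 'I_n -> R) (w : vec K) (v : vec n) :
  (forall k, w k = \big[Rplus/0]_(j < n) (M k j * v j)) ->
  bil H w w = bil (fun j l =>
    \big[Rplus/0]_(k < K) \big[Rplus/0]_(k' < K) (M k j * H k k' * M k' l)) v v.
Proof.
move=> Hw; rewrite /bil (dot_comp _ _ _ M w v Hw); congr (dot _ v).
apply: functional_extensionality => j.
rewrite (eq_bigr (fun k => dot (fun l =>
  \big[Rplus/0]_(k' < K) (H k k' * M k' l) * M k j) v)); last first.
  by move=> k _; rewrite (dot_comp _ _ _ M w v Hw) dot_mulr.
rewrite -dot_suml; congr (dot _ v); apply: functional_extensionality => l.
apply: eq_bigr => k _; rewrite big_distrl /=; apply: eq_bigr => k' _; ring.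
Qed.

Lemma bil_transpose n (M : mat n) v : bil (fun j k => M k j) v v = bil M v v.
Proof.
rewrite /bil /dot.
rewrite (eq_bigr (fun j => \big[Rplus/0]_(k < n) (M k j * v k * v j))); last first.
  by move=> j _; rewrite big_distrl.
rewrite (exchange_big_dep xpredT) //=; apply: eq_bigr => k _.
by rewrite big_distrl /=; apply: eq_bigr => j _; ring.
Qed.

Lemma qform_symmetrize n (M : mat n) v :
  qform (fun j k => (M j k + M k j) / 2) v = qform M v.
Proof.
rewrite !qform_bil.
have -> : bil (fun j k => (M j k + M k j) / 2) v v
          = / 2 * (bil M v v + bil (fun j k => M k j) v v).
  rewrite /bil /dot -big_split big_distrr /=; apply: eq_bigr => j _ /=.
  rewrite -Rmult_plus_distr_r -big_split /= -Rmult_assoc; congr (_ * _).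
  by rewrite big_distrr /=; apply: eq_bigr => k _ /=; field.
by rewrite bil_transpose; field.
Qed.

Lemma qform_scale n (M : mat n) s v : qform M (vscale s v) = s ^ 2 * qform M v.
Proof.
rewrite !qform_bil /bil dot_scaler.
rewrite (_ : (fun j => dot (M j) (vscale s v)) = (fun j => s * dot (M j) v)); last first.
  by apply: functional_extensionality => j; rewrite dot_scaler.
by rewrite dot_scalel; ring.
Qed.

Lemma dot_scale_diag n s (v : vec n) : dot (vscale s v) (vscale s v) = s ^ 2 * dot v v.
Proof. by rewrite /dot big_distrr; apply: eq_bigr => i _ /=; rewrite /vscale; ring. Qed.

Lemma dot_add_diag_ge n (p e : vec n) :
  dot p p - 2 * (norm1 p * norm1 e) <= dot (vadd p e) (vadd p e).
Proof.
have -> : dot (vadd p e) (vadd p e) = dot p p + 2 * dot p e + dot e e.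
  by rewrite /dot big_distrr -!big_split; apply: eq_bigr => i _ /=; rewrite /vadd; ring.
have : Rabs (dot p e) <= norm1 p * norm1 e.
  by rewrite dotC Rmult_comm; apply: dot_le => i; exact: Rabs_le_norm1.
have := dot_ge0 _ e; split_Rabs; lra.
Qed.

Lemma mulmv_id n (v : vec n) : mulmv idmat v = v.
Proof.
apply: functional_extensionality => i; rewrite -[RHS](sum_basisl _ v i).
by apply: eq_bigr => j _; rewrite /idmat /basis eq_sym.
Qed.

Lemma mulmv_mmul n (A B : mat n) v : mulmv (mmul A B) v = mulmv A (mulmv B v).
Proof.
apply: functional_extensionality => i; rewrite /mulmv /mmul.
rewrite (eq_bigr (fun k => \big[Rplus/0]_(j < n) (A i j * B j k * v k))); last first.
  by move=> k _; rewrite big_distrl.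
rewrite (exchange_big_dep xpredT) //=; apply: eq_bigr => j _.
by rewrite big_distrr /=; apply: eq_bigr => k _; ring.
Qed.

Lemma mulmv_scale n (M : mat n) s v : mulmv M (vscale s v) = vscale s (mulmv M v).
Proof. by apply: functional_extensionality => i; exact: (dot_scaler _ (M i) v s). Qed.

Lemma cabs_le a b : cabs a b <= Rabs a + Rabs b.
Proof.
have ha := Rabs_pos a; have hb := Rabs_pos b.
rewrite /cabs -(sqrt_square (Rabs a + Rabs b)); last lra.
apply: sqrt_le_1_alt.
have -> : a ^ 2 = Rabs a * Rabs a by rewrite -Rabs_mult Rabs_right /=; nra.
have -> : b ^ 2 = Rabs b * Rabs b by rewrite -Rabs_mult Rabs_right /=; nra.
nra.
Qed.

(** * Partial derivatives and Taylor's formula *)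

Definition is_partial {N} (G : vec N -> R) (j : 'I_N) (D : vec N -> R) : Prop :=
  forall z, derivable_pt_lim (fun h => G (vadd z (vscale h (basis j)))) 0 (D z).

Lemma is_partial_unique {N} (G : vec N -> R) D j z l :
  is_partial G j D -> derivable_pt_lim (fun h => G (vadd z (vscale h (basis j)))) 0 l ->
  D z = l.
Proof. by move=> H1 H2; exact: uniqueness_limite (H1 z) H2. Qed.

Lemma derivable_pt_lim_at (f : R -> R) s0 l :
  derivable_pt_lim (fun h => f (s0 + h)) 0 l -> derivable_pt_lim f s0 l.
Proof.
move=> H eps Heps; have [del Hd] := H eps Heps; exists del => h h0 hd.
by have := Hd h h0 hd; rewrite !Rplus_0_l Rplus_0_r.
Qed.

Lemma derivable_pt_lim_val (f : R -> R) x l l' :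
  derivable_pt_lim f x l -> l = l' -> derivable_pt_lim f x l'.
Proof. by move=> H <-. Qed.

Lemma is_partial_line {N} (G : vec N -> R) j D : is_partial G j D ->
  forall q tau, derivable_pt_lim (fun tau => G (vadd q (vscale tau (basis j)))) tau
                  (D (vadd q (vscale tau (basis j)))).
Proof.
move=> H q tau; apply: derivable_pt_lim_at.
apply: derivable_pt_lim_ext (H (vadd q (vscale tau (basis j)))) => h.
by congr G; vext; ring.
Qed.

Lemma MVT_between (f f' : R -> R) a b :
  (forall c, derivable_pt_lim f c (f' c)) ->
  exists c, f b - f a = f' c * (b - a) /\ Rmin a b <= c <= Rmax a b.
Proof.
move=> Hd; case: (Rtotal_order a b) => [lt|[eq|gt]].
- have [c [h1 h2]] := MVT_cor2 f f' a b lt (fun c _ => Hd c).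
  by exists c; split => //; rewrite Rmin_left ?Rmax_right; lra.
- by subst; exists b; split; [ring | rewrite Rmin_left ?Rmax_left; lra].
- have [c [h1 h2]] := MVT_cor2 f f' b a gt (fun c _ => Hd c).
  by exists c; split; [lra | rewrite Rmin_right ?Rmax_left; lra].
Qed.

Lemma Rabs_le_between (x y : R) : Rmin 0 y <= x <= Rmax 0 y -> Rabs x <= Rabs y.
Proof. by rewrite /Rmin /Rmax; case: Rle_dec => H [h1 h2]; split_Rabs; lra. Qed.

(* Mean value theorem along the m-th axis, then continuity of [Dm] at [p]. *)
Lemma derivable_partial_step {N} (G : vec N -> R) m Dm p (a : vec N) c :
  is_partial G m Dm -> continuous_vec Dm ->
  derivable_pt_lim (fun h => G (vadd (vadd p (vscale h a)) (vscale (h * c) (basis m)))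
                             - G (vadd p (vscale h a))) 0 (c * Dm p).
Proof.
move=> Hpd Hc eps Heps.
have Hca := Rabs_pos c; have Hna := norm1_ge0 _ a.
have He1 : 0 < eps / (Rabs c + 1) by apply: Rdiv_lt_0_compat => //; lra.
have [del1 [Hdel1 Hdel]] := Hc p _ He1.
have Hd2 : 0 < del1 / (norm1 a + Rabs c + 1) by apply: Rdiv_lt_0_compat; lra.
exists (mkposreal _ Hd2) => h hn0 /= hlt.
rewrite !Rplus_0_l.
have -> : vadd (vadd p (vscale 0 a)) (vscale (0 * c) (basis m)) = vadd p (vscale 0 a)
  by vext; ring.
rewrite Rminus_diag Rminus_0_r.
set q := vadd p (vscale h a).
have [th [Hth Hb]] := MVT_between (fun tau => G (vadd q (vscale tau (basis m))))
  (fun tau => Dm (vadd q (vscale tau (basis m)))) 0 (h * c) (is_partial_line _ _ _ Hpd q).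
rewrite (_ : vadd q (vscale 0 (basis m)) = q) in Hth; last by vext; ring.
rewrite Hth Rminus_0_r.
have -> : Dm (vadd q (vscale th (basis m))) * (h * c) / h - c * Dm p
          = c * (Dm (vadd q (vscale th (basis m))) - Dm p) by field.
rewrite Rabs_mult.
have Hth' := Rabs_le_between _ _ Hb; rewrite Rabs_mult in Hth'.
have Hclose : vnorm (vsub (vadd q (vscale th (basis m))) p) < del1.
  apply: Rle_lt_trans (vnorm_le_norm1 _ _) _.
  have -> : vsub (vadd q (vscale th (basis m))) p = vadd (vscale h a) (vscale th (basis m))
    by rewrite /q; vext; ring.
  apply: Rle_lt_trans (norm1_add _ _ _) _.
  rewrite !norm1_scale norm1_basis Rmult_1_r.
  have Hh := Rabs_pos h.
  have : Rabs h * (norm1 a + Rabs c + 1) < del1.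
    have hX : 0 < norm1 a + Rabs c + 1 by lra.
    have := Rmult_lt_compat_r _ _ _ hX hlt.
    by rewrite /Rdiv Rmult_assoc Rinv_l ?Rmult_1_r; lra.
  nra.
have := Hdel _ Hclose.
set u := Rabs (_ - _) => Hu.
have : Rabs c * u <= Rabs c * (eps / (Rabs c + 1)) by apply: Rmult_le_compat_l; lra.
have : Rabs c * (eps / (Rabs c + 1)) < eps.
  have -> : Rabs c * (eps / (Rabs c + 1)) = eps - eps / (Rabs c + 1) by field; lra.
  lra.
lra.
Qed.

Definition vtrunc {N} (m : nat) (w : vec N) : vec N :=
  fun i => if (i < m)%nat then w i else 0.

Lemma vtrunc_succ N (w : vec N) m (Hm : (m < N)%nat) :
  vtrunc m.+1 w = vadd (vtrunc m w) (vscale (w (Ordinal Hm)) (basis (Ordinal Hm))).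
Proof.
apply: functional_extensionality => x; rewrite /vadd /vscale /vtrunc /basis.
case: (ltngtP x m) => Him.
- have -> : (x == Ordinal Hm) = false by apply/negbTE; rewrite -val_eqE /= neq_ltn Him.
  by rewrite ltnS ltnW //; ring.
- have -> : (x == Ordinal Hm) = false by apply/negbTE; rewrite -val_eqE /= neq_ltn Him orbT.
  by rewrite ltnS leqNgt Him /=; ring.
- have -> : x = Ordinal Hm by apply: val_inj.
  by rewrite eqxx /= ltnSn; ring.
Qed.

(* Continuity of the partials gives the directional derivative, adding one
   coordinate direction at a time. *)
Lemma derivable_vtrunc {N} (G : vec N -> R) (D : 'I_N -> vec N -> R) (w : vec N) :
  (forall j, is_partial G j (D j)) -> (forall j, continuous_vec (D j)) ->
  forall m p, derivable_pt_lim (fun h => G (vadd p (vscale h (vtrunc m w)))) 0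
                (dot (fun j => D j p) (vtrunc m w)).
Proof.
move=> Hpd Hc; elim=> [|m IH] p.
  have -> : vtrunc 0 w = (fun _ => 0) by apply: functional_extensionality => i.
  rewrite dot0r; apply: (derivable_pt_lim_ext (fun _ => G p)).
    by move=> h; congr G; vext; ring.
  exact: derivable_pt_lim_const.
case: (ltnP m N) => Hm; last first.
  have -> : vtrunc m.+1 w = vtrunc m w => //.
  apply: functional_extensionality => i; rewrite /vtrunc.
  by rewrite (leq_trans (ltn_ord i) Hm) (ltn_trans (leq_trans (ltn_ord i) Hm)).
rewrite (vtrunc_succ _ _ _ Hm) dot_addr dot_scaler dot_basisr.
set mo := Ordinal Hm.
apply: (derivable_pt_lim_ext (fun h =>
   (G (vadd (vadd p (vscale h (vtrunc m w))) (vscale (h * w mo) (basis mo)))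
    - G (vadd p (vscale h (vtrunc m w)))) + G (vadd p (vscale h (vtrunc m w))))).
  by move=> h; rewrite Rplus_comm Rplus_minus; congr G; vext; ring.
rewrite Rplus_comm; apply: derivable_pt_lim_plus; last exact: IH.
exact: derivable_partial_step.
Qed.

Lemma derivable_line {N} (G : vec N -> R) (D : 'I_N -> vec N -> R) (p w : vec N) s0 :
  (forall j, is_partial G j (D j)) -> (forall j, continuous_vec (D j)) ->
  derivable_pt_lim (fun s => G (vadd p (vscale s w))) s0
     (dot (fun j => D j (vadd p (vscale s0 w))) w).
Proof.
move=> Hpd Hc; apply: derivable_pt_lim_at.
have Hw : vtrunc N w = w by apply: functional_extensionality => i; rewrite /vtrunc ltn_ord.
have := derivable_vtrunc G D w Hpd Hc N (vadd p (vscale s0 w)); rewrite Hw.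
by apply: derivable_pt_lim_ext => h; congr G; vext; ring.
Qed.

Lemma derivable_pt_lim_sum {I : Type} (r : seq I) (F : I -> R -> R) (F' : I -> R) s :
  (forall i, derivable_pt_lim (F i) s (F' i)) ->
  derivable_pt_lim (fun s => \big[Rplus/0]_(i <- r) F i s) s (\big[Rplus/0]_(i <- r) F' i).
Proof.
move=> H; elim: r => [|a r IH].
  rewrite big_nil; apply: (derivable_pt_lim_ext (fun _ => 0)).
    by move=> h; rewrite big_nil.
  exact: derivable_pt_lim_const.
rewrite big_cons; apply: (derivable_pt_lim_ext (fun s => F a s + \big[Rplus/0]_(i <- r) F i s)).
  by move=> h; rewrite big_cons.
exact: (derivable_pt_lim_plus (F a)).
Qed.

Lemma derivable_pt_lim_mulc (F : R -> R) l c s :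
  derivable_pt_lim F s l -> derivable_pt_lim (fun s => F s * c) s (l * c).
Proof.
move=> H; apply: (derivable_pt_lim_val _ _ (l * c + F s * 0)); last ring.
by apply: (derivable_pt_lim_mult F (fun _ => c)) => //; exact: derivable_pt_lim_const.
Qed.

Lemma derivable_pt_lim_dotl {N} (F : 'I_N -> R -> R) (F' : 'I_N -> R) (w : vec N) s :
  (forall i, derivable_pt_lim (F i) s (F' i)) ->
  derivable_pt_lim (fun s => dot (fun i => F i s) w) s (dot F' w).
Proof. by move=> H; apply: derivable_pt_lim_sum => i; exact: derivable_pt_lim_mulc. Qed.

(* Integral form of the remainder, realised as the mean value theorem for
   [g s = f s + f1 s (1 - s) + f2 s (1 - s)^2 / 2], whose derivative is
   [f3 s (1 - s)^2 / 2]. *)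
Lemma taylor2_R (f f1 f2 f3 : R -> R) M :
  (forall s, derivable_pt_lim f s (f1 s)) ->
  (forall s, derivable_pt_lim f1 s (f2 s)) ->
  (forall s, derivable_pt_lim f2 s (f3 s)) ->
  (forall s, 0 <= s <= 1 -> Rabs (f3 s) <= M) ->
  Rabs (f 1 - f 0 - f1 0 - / 2 * f2 0) <= M / 2.
Proof.
move=> H1 H2 H3 HM.
pose g s := f s + f1 s * (1 - s) + / 2 * (f2 s * ((1 - s) * (1 - s))).
pose g' s := / 2 * (f3 s * ((1 - s) * (1 - s))).
have Hg : forall s, derivable_pt_lim g s (g' s).
  move=> s; rewrite /g /g'.
  have Hl : derivable_pt_lim (fun s => 1 - s) s (-1).
    apply: (derivable_pt_lim_val _ _ (0 - 1)); last ring.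
    by apply: derivable_pt_lim_minus; [exact: derivable_pt_lim_const | exact: derivable_pt_lim_id].
  have Hq : derivable_pt_lim (fun s => (1 - s) * (1 - s)) s (-1 * (1 - s) + (1 - s) * -1).
    exact: (derivable_pt_lim_mult (fun s => 1 - s) (fun s => 1 - s)).
  apply: (derivable_pt_lim_val _ _ (f1 s + (f2 s * (1 - s) + f1 s * -1)
     + / 2 * (f3 s * ((1 - s) * (1 - s)) + f2 s * (-1 * (1 - s) + (1 - s) * -1)))); last field.
  apply: derivable_pt_lim_plus.
    apply: derivable_pt_lim_plus; first exact: H1.
    exact: (derivable_pt_lim_mult f1 (fun s => 1 - s)).
  apply: (derivable_pt_lim_scal (fun s => f2 s * ((1 - s) * (1 - s)))).
  exact: (derivable_pt_lim_mult f2 (fun s => (1 - s) * (1 - s))).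
have [c [Hc Hb]] := MVT_between g g' 0 1 Hg.
rewrite Rmin_left ?Rmax_right in Hb; try lra.
have -> : f 1 - f 0 - f1 0 - / 2 * f2 0 = g 1 - g 0 by rewrite /g; ring.
rewrite Hc /g' Rminus_0_r Rmult_1_r Rabs_mult Rabs_mult.
have := HM c Hb; have := Rabs_pos (f3 c).
rewrite (Rabs_right (/ 2)); last lra.
rewrite (Rabs_right ((1 - c) * (1 - c))); last nra.
move=> h1 h2; have : (1 - c) * (1 - c) <= 1 by nra.
nra.
Qed.

Definition C3_partials {N} (G : vec N -> R) (G1 : 'I_N -> vec N -> R)
  (G2 : 'I_N -> 'I_N -> vec N -> R) (G3 : 'I_N -> 'I_N -> 'I_N -> vec N -> R) : Prop :=
  continuous_vec G /\
    (forall j, is_partial G j (G1 j)) /\ (forall j, continuous_vec (G1 j)) /\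
    (forall j k, is_partial (G1 j) k (G2 j k)) /\ (forall j k, continuous_vec (G2 j k)) /\
    (forall j k l, is_partial (G2 j k) l (G3 j k l)) /\ (forall j k l, continuous_vec (G3 j k l)).

Lemma smooth_C3 {N} (F : vec N -> R) : smooth F ->
  exists G1 G2 G3, C3_partials F G1 G2 G3.
Proof.
move=> HF; have [C0 H1] := HF 3%nat.
have [G1 HG1] := choice _ H1.
have H2 (jk : 'I_N * 'I_N) : exists G, is_partial (G1 jk.1) jk.2 G /\ Ck 1 G.
  by case: jk => j k; exact: (proj2 (proj2 (HG1 j)) k).
have [G2 HG2] := choice _ H2.
have H3 (jkl : 'I_N * 'I_N * 'I_N) : exists G, is_partial (G2 jkl.1) jkl.2 G /\ Ck 0 G.
  by case: jkl => [[j k] l]; exact: (proj2 (proj2 (HG2 (j, k))) l).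
have [G3 HG3] := choice _ H3.
exists G1, (fun j k => G2 (j, k)), (fun j k l => G3 (j, k, l)).
do !split => //.
- by move=> j; exact: (proj1 (HG1 j)).
- by move=> j; exact: (proj1 (proj2 (HG1 j))).
- by move=> j k; exact: (proj1 (HG2 (j, k))).
- by move=> j k; exact: (proj1 (proj2 (HG2 (j, k)))).
- by move=> j k l; exact: (proj1 (HG3 (j, k, l))).
- by move=> j k l; exact: (proj2 (HG3 (j, k, l))).
Qed.

Lemma taylor2_vec {N} (G : vec N -> R) G1 G2 G3 p w B :
  C3_partials G G1 G2 G3 ->
  (forall s, 0 <= s <= 1 -> forall j k l, Rabs (G3 j k l (vadd p (vscale s w))) <= B) ->
  Rabs (G (vadd p w) - G p - dot (fun j => G1 j p) w - / 2 * bil (fun j k => G2 j k p) w w)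
    <= B * norm1 w ^ 3 / 2.
Proof.
move=> [_ [P1 [C1 [P2 [C2 [P3 C3]]]]]] HB.
pose q s := vadd p (vscale s w).
have E1 : vadd p (vscale 1 w) = vadd p w by vext; ring.
have E0 : vadd p (vscale 0 w) = p by vext; ring.
have := taylor2_R (fun s => G (q s)) (fun s => dot (fun j => G1 j (q s)) w)
  (fun s => dot (fun j => dot (fun k => G2 j k (q s)) w) w)
  (fun s => dot (fun j => dot (fun k => dot (fun l => G3 j k l (q s)) w) w) w)
  (B * norm1 w ^ 3).
rewrite /q E1 E0; apply.
- by move=> s; exact: derivable_line.
- by move=> s; apply: derivable_pt_lim_dotl => j; exact: derivable_line.
- move=> s; apply: derivable_pt_lim_dotl => j; apply: derivable_pt_lim_dotl => k.
  exact: derivable_line.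
- move=> s Hs.
  have H2 j : Rabs (dot (fun k => dot (fun l => G3 j k l (q s)) w) w)
              <= B * norm1 w * norm1 w.
    by apply: dot_le => k; apply: dot_le => l; exact: HB.
  by apply: Rle_trans (dot_le _ _ _ _ H2) _; right; ring.
Qed.

(** * Boundedness on bounded sets *)

Definition incr_seq (phi : nat -> nat) := forall k, (phi k < phi k.+1)%nat.

Lemma incr_seq_ge phi : incr_seq phi -> forall k, (k <= phi k)%nat.
Proof. by move=> H; elim=> [|k IH] //; exact: leq_ltn_trans IH (H k). Qed.

Lemma incr_seq_comp phi psi : incr_seq phi -> incr_seq psi -> incr_seq (fun k => phi (psi k)).
Proof.
move=> Hphi Hpsi k.
have mono a b : (a <= b)%nat -> (phi a <= phi b)%nat.
  elim: b => [|b IH]; first by rewrite leqn0 => /eqP ->.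
  rewrite leq_eqVlt => /orP [/eqP -> //| h].
  exact: leq_trans (IH h) (ltnW (Hphi b)).
exact: leq_trans (Hphi _) (mono _ _ (Hpsi k)).
Qed.

Lemma bolzano_weierstrass_subseq (u : nat -> R) L : (forall k, Rabs (u k) <= L) ->
  exists phi l, incr_seq phi /\ forall eps, 0 < eps -> exists M, forall k, (M <= k)%nat ->
    Rabs (u (phi k) - l) < eps.
Proof.
move=> Hu.
have [l Hl] := Bolzano_Weierstrass u (fun c => - L <= c <= L) (compact_P3 _ _)
  (fun k => let h := Hu k in ltac:(split_Rabs; lra)).
have Hp (Nn k : nat) : exists p, (Nn <= p)%nat /\ Rabs (u p - l) < / INR k.+1.
  have hk : 0 < / INR k.+1 by apply: Rinv_0_lt_compat; apply: lt_0_INR; apply/ltP.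
  have hn : neighbourhood (fun y => Rabs (y - l) < / INR k.+1) l.
    by exists (mkposreal _ hk) => y hy; exact: hy.
  have [p [hp1 hp2]] := Hl (fun y => Rabs (y - l) < / INR k.+1) Nn hn.
  by exists p; split => //; apply/leP.
have [pick Hpick] := @choice (nat * nat) nat
  (fun (nk : nat * nat) p => (nk.1 <= p)%nat /\ Rabs (u p - l) < / INR nk.2.+1)
  (fun nk => Hp nk.1 nk.2).
pose phi := fix phi k := match k with O => pick (0%nat, 0%nat) | S k' => pick ((phi k').+1, k) end.
exists phi, l; split; first by move=> k; exact: (proj1 (Hpick ((phi k).+1, k.+1))).
move=> eps heps; have [M [hM1 hM2]] := archimed_cor1 eps heps.
exists M => k hk.
have hb : Rabs (u (phi k) - l) < / INR k.+1.
  case: k hk => [|k] hk; first exact: (proj2 (Hpick (0%nat, 0%nat))).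
  exact: (proj2 (Hpick ((phi k).+1, k.+1))).
apply: Rlt_le_trans hb _; apply: Rle_trans _ (Rlt_le _ _ hM1).
apply: Rinv_le_contravar; first by apply: lt_0_INR.
by apply: le_INR; apply/leP; exact: leq_trans hk (leqnSn _).
Qed.

Lemma bolzano_weierstrass_subseq_vec N (s : nat -> vec N) L :
  (forall k i, Rabs (s k i) <= L) ->
  exists phi (l : vec N), incr_seq phi /\ forall i eps, 0 < eps ->
    exists M, forall k, (M <= k)%nat -> Rabs (s (phi k) i - l i) < eps.
Proof.
move=> Hs.
suff /(_ N) [phi [l [H1 H2]]] : forall m, exists phi (l : vec N), incr_seq phi /\
    forall (i : 'I_N) eps, (i < m)%nat -> 0 < eps ->
    exists M, forall k, (M <= k)%nat -> Rabs (s (phi k) i - l i) < eps.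
  by exists phi, l; split => // i eps he; exact: H2.
elim=> [|m [phi [l [Hi Hc]]]]; first by exists (fun k => k), (fun _ => 0); split => // k.
case: (ltnP m N) => Hm; last first.
  exists phi, l; split => // i eps hi he; apply: Hc => //.
  exact: leq_trans (ltn_ord i) Hm.
set mo := Ordinal Hm.
have [psi [lm [Hpsi Hlm]]] := bolzano_weierstrass_subseq (fun k => s (phi k) mo) L
  (fun k => Hs _ _).
exists (fun k => phi (psi k)), (fun i => if i == mo then lm else l i).
split; first exact: incr_seq_comp.
move=> i eps hi he; case: eqP => [->|hne]; first by have [M HM] := Hlm eps he; exists M.
have him : (i < m)%nat.
  rewrite ltnS leq_eqVlt in hi; case/orP: hi => // /eqP hh.
  by exfalso; apply: hne; apply: val_inj.
have [M HM] := Hc i eps him he; exists M => k hk.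
by apply: HM; exact: leq_trans hk (incr_seq_ge _ Hpsi k).
Qed.

Lemma continuous_bounded N (F : vec N -> R) L : continuous_vec F ->
  exists B, forall q, norm1 q <= L -> Rabs (F q) <= B.
Proof.
move=> HF; apply: NNPP => Hno.
have Hs (k : nat) : exists q, norm1 q <= L /\ INR k < Rabs (F q).
  apply: NNPP => hk; apply: Hno; exists (INR k) => q hq.
  by apply: Rnot_lt_le => hlt; apply: hk; exists q.
have [s Hsk] := choice _ Hs.
have [phi [l [Hphi Hl]]] := bolzano_weierstrass_subseq_vec N s L
  (fun k i => Rle_trans _ _ _ (Rabs_le_norm1 _ _ i) (proj1 (Hsk k))).
have [del [Hdel HFd]] := HF l 1 Rlt_0_1.
have hc : 0 < del / (INR N + 1) by apply: Rdiv_lt_0_compat => //; have := pos_INR N; lra.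
have [Mf HMf] := choice (fun i M => forall k, (M <= k)%nat ->
  Rabs (s (phi k) i - l i) < del / (INR N + 1)) (fun i => Hl i _ hc).
have [n0 Hn0] := INR_archimed 1 (Rabs (F l) + 1) Rlt_0_1.
pose k := maxn (\max_(i < N) Mf i) n0.
have Hclose : vnorm (vsub (s (phi k)) l) < del.
  apply: Rle_lt_trans (vnorm_le_norm1 _ _) _.
  apply: Rle_lt_trans (_ : _ <= INR N * (del / (INR N + 1))) _.
    apply: norm1_le => i; apply: Rlt_le; apply: HMf.
    exact: leq_trans (leq_bigmax i) (leq_maxl _ _).
  have := pos_INR N => hN.
  have -> : INR N * (del / (INR N + 1)) = del - del / (INR N + 1) by field; lra.
  lra.
have := HFd _ Hclose; have := proj2 (Hsk (phi k)).
have : INR n0 <= INR (phi k).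
  by apply: le_INR; apply/leP; exact: leq_trans (leq_maxr _ n0) (incr_seq_ge _ Hphi k).
have := Rabs_triang_inv (F (s (phi k))) (F l).
lra.
Qed.

Lemma continuous_family_bounded {N} (I : finType) (F : I -> vec N -> R) L :
  (forall i, continuous_vec (F i)) ->
  exists B, 0 <= B /\ forall i q, norm1 q <= L -> Rabs (F i q) <= B.
Proof.
move=> HF; have [Bf HB] := choice _ (fun i => continuous_bounded N (F i) L (HF i)).
exists (\big[Rplus/0]_(i : I) Rabs (Bf i)); split; first by apply: sum_ge0 => i; exact: Rabs_pos.
move=> i q hq; apply: Rle_trans (HB i q hq) _; apply: Rle_trans (Rle_abs _) _.
rewrite (bigD1 i) //= -{1}(Rplus_0_r (Rabs (Bf i))); apply: Rplus_le_compat_l.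
by apply: sum_ge0 => j; exact: Rabs_pos.
Qed.

Definition C3_bounded {N} (G : vec N -> R) (G1 : 'I_N -> vec N -> R)
  (G2 : 'I_N -> 'I_N -> vec N -> R) (G3 : 'I_N -> 'I_N -> 'I_N -> vec N -> R)
  (L B0 B1 B2 B3 : R) : Prop :=
  forall q, norm1 q <= L -> [/\ Rabs (G q) <= B0, forall j, Rabs (G1 j q) <= B1,
    forall j k, Rabs (G2 j k q) <= B2 & forall j k l, Rabs (G3 j k l q) <= B3].

Lemma C3_partials_bounded_family {N} {I : finType} (G : I -> vec N -> R) G1 G2 G3 L :
  (forall i, C3_partials (G i) (G1 i) (G2 i) (G3 i)) ->
  exists B0 B1 B2 B3, [/\ 0 <= B0, 0 <= B1, 0 <= B2 & 0 <= B3] /\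
    forall i, C3_bounded (G i) (G1 i) (G2 i) (G3 i) L B0 B1 B2 B3.
Proof.
move=> HC.
have C0 i : continuous_vec (G i) by case: (HC i).
have C1 (p : I * 'I_N) : continuous_vec (G1 p.1 p.2).
  by case: (HC p.1) => _ [_ [C _]]; exact: C.
have C2 (p : I * 'I_N * 'I_N) : continuous_vec (G2 p.1.1 p.1.2 p.2).
  by case: (HC p.1.1) => _ [_ [_ [_ [C _]]]]; exact: C.
have C3 (p : I * 'I_N * 'I_N * 'I_N) : continuous_vec (G3 p.1.1.1 p.1.1.2 p.1.2 p.2).
  by case: (HC p.1.1.1) => _ [_ [_ [_ [_ [_ C]]]]]; exact: C.
have [B0 [B00 H0]] := continuous_family_bounded _ _ L C0.
have [B1 [B10 H1]] := continuous_family_bounded _ _ L C1.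
have [B2 [B20 H2]] := continuous_family_bounded _ _ L C2.
have [B3 [B30 H3]] := continuous_family_bounded _ _ L C3.
exists B0, B1, B2, B3; split => // i q hq; split.
- exact: H0.
- by move=> j; exact: (H1 (i, j)).
- by move=> j k; exact: (H2 (i, j, k)).
- by move=> j k l; exact: (H3 (i, j, k, l)).
Qed.

Lemma C3_partials_bounded {N} (G : vec N -> R) G1 G2 G3 L : C3_partials G G1 G2 G3 ->
  exists B0 B1 B2 B3, [/\ 0 <= B0, 0 <= B1, 0 <= B2 & 0 <= B3] /\
    C3_bounded G G1 G2 G3 L B0 B1 B2 B3.
Proof.
move=> HC; have [B0 [B1 [B2 [B3 [HB H]]]]] := C3_partials_bounded_family
  (fun _ : unit => G) (fun _ => G1) (fun _ => G2) (fun _ => G3) L (fun _ => HC).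
by exists B0, B1, B2, B3; split => //; exact: H tt.
Qed.

Lemma seq_compact_bounded n (K0 : vec n -> Prop) : seq_compact K0 ->
  exists LK, forall k, K0 k -> norm1 k <= LK.
Proof.
move=> HK; apply: NNPP => Hno.
have Hs (k : nat) : exists q, K0 q /\ INR k < norm1 q.
  apply: NNPP => hk; apply: Hno; exists (INR k) => q hq.
  by apply: Rnot_lt_le => hlt; apply: hk; exists q.
have [s Hsk] := choice _ Hs.
have [phi [l [Hphi [Hl Hc]]]] := HK s (fun k => proj1 (Hsk k)).
have [M HM] := Hc 1 Rlt_0_1.
have [n0 Hn0] := INR_archimed 1 (norm1 l + INR n) Rlt_0_1.
pose k := maxn M n0.
have h1 := HM k (leq_maxl _ _).
have h2 := proj2 (Hsk (phi k)).
have h3 : INR n0 <= INR (phi k).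
  by apply: le_INR; apply/leP; exact: leq_trans (leq_maxr M n0) (incr_seq_ge _ Hphi k).
have h4 := norm1_add _ (vsub (s (phi k)) l) l; rewrite vadd_vsubK in h4.
have h5 := norm1_le_vnorm _ (vsub (s (phi k)) l).
have : INR n * vnorm (vsub (s (phi k)) l) <= INR n * 1.
  by apply: Rmult_le_compat_l; [exact: pos_INR | lra].
have := pos_INR n; lra.
Qed.

Definition vpack {n} (a b : vec n) : vec (n + n) :=
  fun k => match fintype.split k with inl i => a i | inr i => b i end.

Lemma vpack_l n (a b : vec n) i : vpack a b (lshift n i) = a i.
Proof. by rewrite /vpack (unsplitK (inl i)). Qed.
Lemma vpack_r n (a b : vec n) i : vpack a b (rshift n i) = b i.
Proof. by rewrite /vpack (unsplitK (inr i)). Qed.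
Lemma vfst_pack n (a b : vec n) : vfst (vpack a b) = a.
Proof. by apply: functional_extensionality => i; exact: vpack_l. Qed.
Lemma vsnd_pack n (a b : vec n) : vsnd (vpack a b) = b.
Proof. by apply: functional_extensionality => i; exact: vpack_r. Qed.
Lemma vcons_0 N t (z : vec N) : vcons t z ord0 = t.
Proof. by rewrite /vcons unlift_none. Qed.
Lemma vcons_lift N t (z : vec N) i : vcons t z (lift ord0 i) = z i.
Proof. by rewrite /vcons liftK. Qed.

Lemma basis_lift N (j i : 'I_N) : basis (lift ord0 j) (lift ord0 i) = basis j i.
Proof. by rewrite /basis (inj_eq (@lift_inj _ ord0)). Qed.
Lemma basis_lift0 N (j : 'I_N) : basis (lift ord0 j) ord0 = 0.
Proof. by rewrite /basis (negbTE (neq_lift _ _)). Qed.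
Lemma basis_lshift n (j i : 'I_n) : basis (lshift n j) (lshift n i) = basis j i.
Proof. by rewrite /basis -val_eqE /= val_eqE. Qed.
Lemma basis_rshift n (j i : 'I_n) : basis (rshift n j) (rshift n i) = basis j i.
Proof. by rewrite /basis -val_eqE /= eqn_add2l val_eqE. Qed.
Lemma basis_lshift_rshift n (j i : 'I_n) : basis (lshift n j) (rshift n i) = 0.
Proof.
rewrite /basis; have -> // : (rshift n i == lshift n j) = false.
by apply/negbTE; rewrite -val_eqE /= eq_sym neq_ltn (leq_trans (ltn_ord j) (leq_addr _ _)).
Qed.
Lemma basis_rshift_lshift n (j i : 'I_n) : basis (rshift n j) (lshift n i) = 0.
Proof.
rewrite /basis; have -> // : (lshift n i == rshift n j) = false.
by apply/negbTE; rewrite -val_eqE /= neq_ltn (leq_trans (ltn_ord i) (leq_addr _ _)).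
Qed.

Lemma ord_cons_ind N (P : 'I_N.+1 -> Prop) :
  P ord0 -> (forall i, P (lift ord0 i)) -> forall k, P k.
Proof. by move=> h0 hl k; case: (unliftP ord0 k) => [i ->|->]. Qed.
Lemma ord_pack_ind n (P : 'I_(n + n) -> Prop) :
  (forall i, P (lshift n i)) -> (forall i, P (rshift n i)) -> forall k, P k.
Proof. by move=> hl hr k; rewrite -(splitK k); case: (fintype.split k). Qed.

Lemma dot_vcons N (D : vec N.+1) t u :
  dot D (vcons t u) = D ord0 * t + dot (fun i => D (lift ord0 i)) u.
Proof.
rewrite /dot big_ord_recl vcons_0 /=; congr (_ + _).
by apply: eq_bigr => i _; rewrite vcons_lift.
Qed.
Lemma dot_vpack n (D : vec (n + n)) a b :
  dot D (vpack a b) = dot (fun i => D (lshift n i)) a + dot (fun i => D (rshift n i)) b.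
Proof.
by rewrite /dot big_split_ord /=; congr (_ + _); apply: eq_bigr => i _;
  rewrite ?vpack_l ?vpack_r.
Qed.
Lemma norm1_vcons N t (u : vec N) : norm1 (vcons t u) = Rabs t + norm1 u.
Proof.
rewrite /norm1 big_ord_recl vcons_0 /=; congr (_ + _).
by apply: eq_bigr => i _; rewrite vcons_lift.
Qed.
Lemma norm1_vpack n (a b : vec n) : norm1 (vpack a b) = norm1 a + norm1 b.
Proof.
by rewrite /norm1 big_split_ord /=; congr (_ + _); apply: eq_bigr => i _;
  rewrite ?vpack_l ?vpack_r.
Qed.
Lemma bil_vcons0 N (H : mat N.+1) u u' :
  bil H (vcons 0 u) (vcons 0 u') = bil (fun i j => H (lift ord0 i) (lift ord0 j)) u u'.
Proof.
rewrite /bil dot_vcons Rmult_0_r Rplus_0_l; apply: eq_bigr => i _.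
by rewrite dot_vcons Rmult_0_r Rplus_0_l.
Qed.

Ltac vsolve := apply: functional_extensionality;
  elim/ord_cons_ind => [|k]; rewrite ?vcons_0 ?vcons_lift /vadd /vscale /vsub /vzero
    ?vcons_0 ?vcons_lift ?basis_lift0 ?basis_lift;
  try (match goal with kk : 'I_ _ |- _ => move: kk end;
       elim/ord_pack_ind => kk; rewrite ?vpack_l ?vpack_r ?basis_lshift ?basis_rshift
         ?basis_lshift_rshift ?basis_rshift_lshift);
  rewrite /=; try ring.

Lemma vcons_shift N t (z : vec N) h j :
  vcons t (vadd z (vscale h (basis j))) = vadd (vcons t z) (vscale h (basis (lift ord0 j))).
Proof. vsolve. Qed.
Lemma vcons_add N t (z0 v : vec N) : vadd (vcons t z0) (vcons 0 v) = vcons t (vadd z0 v).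
Proof. vsolve. Qed.
Lemma vcons_add_scale N t (z0 v : vec N) s :
  vadd (vcons t z0) (vscale s (vcons 0 v)) = vcons t (vadd z0 (vscale s v)).
Proof. vsolve. Qed.
Lemma vcons_pack_add n t (z0 y v : vec n) :
  vadd (vcons t (vpack vzero z0)) (vcons 0 (vpack y v)) = vcons t (vpack y (vadd z0 v)).
Proof. vsolve. Qed.
Lemma vcons_pack_add_scale n t (z0 y v : vec n) s :
  vadd (vcons t (vpack vzero z0)) (vscale s (vcons 0 (vpack y v)))
  = vcons t (vpack (vscale s y) (vadd z0 (vscale s v))).
Proof. vsolve. Qed.
Lemma vcons_pack_shiftl n t (z0 : vec n) h i :
  vcons t (vpack (vscale h (basis i)) z0)
  = vadd (vcons t (vpack vzero z0)) (vscale h (basis (lift ord0 (lshift n i)))).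
Proof. vsolve. Qed.
Lemma vcons_pack_shiftr n t (z0 : vec n) h i :
  vcons t (vpack vzero (vadd z0 (vscale h (basis i))))
  = vadd (vcons t (vpack vzero z0)) (vscale h (basis (lift ord0 (rshift n i)))).
Proof. vsolve. Qed.

Lemma smooth_strip_C3 {N} T (F : R -> vec N -> R) : smooth_strip T F ->
  exists G G1 G2 G3, (forall t z, 0 <= t <= T -> G (vcons t z) = F t z) /\
    C3_partials G G1 G2 G3.
Proof.
by move=> [G [/smooth_C3 [G1 [G2 [G3 HC]]] HGF]]; exists G, G1, G2, G3.
Qed.

Lemma smooth_strip_C3_family {N} {I : Type} T (F : I -> R -> vec N -> R) :
  (forall i, smooth_strip T (F i)) ->
  exists G G1 G2 G3, forall i, (forall t z, 0 <= t <= T -> G i (vcons t z) = F i t z) /\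
    C3_partials (G i) (G1 i) (G2 i) (G3 i).
Proof.
move=> HF.
have [g Hg] := choice (fun i (p : (vec N.+1 -> R) * ('I_N.+1 -> vec N.+1 -> R)
    * ('I_N.+1 -> 'I_N.+1 -> vec N.+1 -> R) * ('I_N.+1 -> 'I_N.+1 -> 'I_N.+1 -> vec N.+1 -> R)) =>
  (forall t z, 0 <= t <= T -> p.1.1.1 (vcons t z) = F i t z) /\
  C3_partials p.1.1.1 p.1.1.2 p.1.2 p.2)
  (fun i => let: ex_intro G (ex_intro G1 (ex_intro G2 (ex_intro G3 H))) :=
     smooth_strip_C3 T _ (HF i) in ex_intro _ (G, G1, G2, G3) H).
by exists (fun i => (g i).1.1.1), (fun i => (g i).1.1.2), (fun i => (g i).1.2), (fun i => (g i).2).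
Qed.

(** * Second-order expansion of [phi(t, x(t,z0) - x(t,z), z)] *)

Section LocalExpansion.

Variables (n : nat) (T LZ rho : R).
Variables (x : R -> vec n -> vec n) (J : R -> vec n -> mat n).
Variables (phi : R -> vec n -> vec n -> R) (gy gz : R -> vec n -> vec n).
Hypothesis HJ : forall t z (i j : 'I_n), 0 <= t <= T ->
  derivable_pt_lim (fun h => x t (vadd z (vscale h (basis j))) i) 0 (J t z i j).
Hypothesis Hgy : forall t z (j : 'I_n), 0 <= t <= T ->
  derivable_pt_lim (fun h => phi t (vscale h (basis j)) z) 0 (gy t z j).
Hypothesis Hgz : forall t z (j : 'I_n), 0 <= t <= T ->
  derivable_pt_lim (fun h => phi t vzero (vadd z (vscale h (basis j)))) 0 (gz t z j).
Hypothesis Hgzy : forall t z (j : 'I_n), 0 <= t <= T ->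
  \big[Rplus/0]_(i < n) (J t z i j * gy t z i) = gz t z j.

Variables (gx : 'I_n -> vec n.+1 -> R) (gx1 : 'I_n -> 'I_n.+1 -> vec n.+1 -> R).
Variables (gx2 : 'I_n -> 'I_n.+1 -> 'I_n.+1 -> vec n.+1 -> R).
Variables (gx3 : 'I_n -> 'I_n.+1 -> 'I_n.+1 -> 'I_n.+1 -> vec n.+1 -> R).
Hypothesis Egx : forall i t z, 0 <= t <= T -> gx i (vcons t z) = x t z i.
Hypothesis Cx : forall i, C3_partials (gx i) (gx1 i) (gx2 i) (gx3 i).
Variables (gp : vec (n + n).+1 -> R) (gp1 : 'I_(n + n).+1 -> vec (n + n).+1 -> R).
Variables (gp2 : 'I_(n + n).+1 -> 'I_(n + n).+1 -> vec (n + n).+1 -> R).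
Variables (gp3 : 'I_(n + n).+1 -> 'I_(n + n).+1 -> 'I_(n + n).+1 -> vec (n + n).+1 -> R).
Hypothesis Egp : forall t w, 0 <= t <= T -> gp (vcons t w) = phi t (vfst w) (vsnd w).
Hypothesis Cp : C3_partials gp gp1 gp2 gp3.

Variables (B0 B1 B2 B3 BP0 BD BH BP3 : R).
Hypothesis Hxb : forall i, C3_bounded (gx i) (gx1 i) (gx2 i) (gx3 i) (T + LZ + rho) B0 B1 B2 B3.
Hypothesis Hpb : C3_bounded gp gp1 gp2 gp3 (T + 2 * INR n * B0 + LZ + rho) BP0 BD BH BP3.
Hypothesis Hpos : [/\ 0 <= B0, 0 <= B1, 0 <= B2, 0 <= B3 & 0 <= rho].
Hypothesis Hpos' : [/\ 0 <= BD, 0 <= BH & 0 <= BP3].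

Definition hess_x t z0 i : mat n := fun j k => gx2 i (lift ord0 j) (lift ord0 k) (vcons t z0).

(* The matrix of [v |-> (0, -J v, v)], the first-order variation of
   [(t, x(t,z0) - x(t,z0+v), z0+v)]. *)
Definition variation_mx t z0 (k : 'I_(n + n).+1) (j : 'I_n) : R :=
  vcons 0 (vpack (fun i => - J t z0 i j) (basis j)) k.

Definition expansion_mx t z0 : mat n := fun j l =>
  \big[Rplus/0]_(k < (n + n).+1) \big[Rplus/0]_(k' < (n + n).+1)
     (variation_mx t z0 k j * gp2 k k' (vcons t (vpack vzero z0)) * variation_mx t z0 k' l)
  - \big[Rplus/0]_(i < n) (gy t z0 i * hess_x t z0 i j l).

Definition Jv_const := INR n * B1.
Definition quad_const := INR n * B2.
Definition rem_const := INR n * B3 / 2.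
Definition xdev_const := quad_const / 2 + rem_const * rho.
Definition ydiff_const := Jv_const + xdev_const * rho.
Definition expansion_const := BD * rem_const
  + / 2 * (BH * xdev_const * (ydiff_const + 1 + (Jv_const + 1)))
  + BP3 / 2 * (ydiff_const + 1) ^ 3.

Lemma expansion_consts_ge0 : [/\ 0 <= Jv_const, 0 <= rem_const, 0 <= xdev_const,
  0 <= ydiff_const & 0 <= expansion_const].
Proof.
case: Hpos => B00 B10 B20 B30 rho0; case: Hpos' => BD0 BH0 BP30.
have hn := pos_INR n.
have a10 : 0 <= Jv_const by apply: Rmult_le_pos.
have a20 : 0 <= quad_const by apply: Rmult_le_pos.
have a30 : 0 <= rem_const by rewrite /rem_const; apply: Rmult_le_pos; [apply: Rmult_le_pos | lra].
have cD0 : 0 <= xdev_const by rewrite /xdev_const; have := Rmult_le_pos _ _ a30 rho0; lra.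
have cy0 : 0 <= ydiff_const by rewrite /ydiff_const; have := Rmult_le_pos _ _ cD0 rho0; lra.
split => //; rewrite /expansion_const.
have := Rmult_le_pos _ _ BD0 a30.
have : 0 <= BH * xdev_const * (ydiff_const + 1 + (Jv_const + 1)).
  by apply: Rmult_le_pos; [apply: Rmult_le_pos | lra].
have : 0 <= BP3 / 2 * (ydiff_const + 1) ^ 3 by apply: Rmult_le_pos; [lra | apply: pow_le; lra].
lra.
Qed.

Section AtPoint.

Variables (t : R) (z0 v : vec n).
Hypothesis Ht : 0 <= t <= T.
Hypothesis Hz0 : norm1 z0 <= LZ.
Hypothesis Hv : norm1 v <= rho.

Definition xquad : vec n := fun i => bil (hess_x t z0 i) v v.
Definition xrem : vec n := fun i =>
  x t (vadd z0 v) i - x t z0 i - mulmv (J t z0) v i - / 2 * xquad i.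
Definition ydiff : vec n := vsub (x t z0) (x t (vadd z0 v)).

Lemma ydiff_expand :
  ydiff = vscale (-1) (vadd (mulmv (J t z0) v) (vadd (vscale (/ 2) xquad) xrem)).
Proof.
by apply: functional_extensionality => i; rewrite /ydiff /xrem /vscale /vadd /vsub; ring.
Qed.

Lemma norm1_base_le : norm1 (vcons t z0) <= T + LZ + rho.
Proof. by rewrite norm1_vcons Rabs_right; case: Hpos => *; lra. Qed.

Lemma partial_x_eq_J i j : gx1 i (lift ord0 j) (vcons t z0) = J t z0 i j.
Proof.
have [_ [P1 _]] := Cx i.
apply: (is_partial_unique _ _ _ _ _ (P1 (lift ord0 j))).
by apply: derivable_pt_lim_ext (HJ t z0 i j Ht) => h; rewrite -vcons_shift Egx.
Qed.

Lemma xrem_le i : Rabs (xrem i) <= B3 * norm1 v ^ 3 / 2.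
Proof.
have := taylor2_vec (gx i) (gx1 i) (gx2 i) (gx3 i) (vcons t z0) (vcons 0 v) B3 (Cx i).
rewrite vcons_add !Egx // dot_vcons bil_vcons0 norm1_vcons Rabs_R0 Rplus_0_l
  Rmult_0_r Rplus_0_l.
have -> : (fun j => gx1 i (lift ord0 j) (vcons t z0)) = J t z0 i.
  by apply: functional_extensionality => j; exact: partial_x_eq_J.
apply=> s Hs j k l; rewrite vcons_add_scale.
have hq : norm1 (vcons t (vadd z0 (vscale s v))) <= T + LZ + rho.
  rewrite norm1_vcons Rabs_right; last lra.
  apply: Rle_trans (Rplus_le_compat_l _ _ _ (norm1_add _ _ _)) _.
  rewrite norm1_scale Rabs_right; last lra.
  have : s * norm1 v <= 1 * norm1 v by apply: Rmult_le_compat_r; [exact: norm1_ge0 | lra].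
  lra.
by case: (Hxb i _ hq) => _ _ _; apply.
Qed.

Lemma norm1_Jv_le : norm1 (mulmv (J t z0) v) <= Jv_const * norm1 v.
Proof.
apply: Rle_trans (norm1_le _ _ (B1 * norm1 v) _) _; last by rewrite /Jv_const; right; ring.
move=> i; apply: dot_le => j; rewrite -partial_x_eq_J.
by case: (Hxb i _ norm1_base_le) => _ + _ _; apply.
Qed.

Lemma norm1_xquad_le : norm1 xquad <= quad_const * norm1 v ^ 2.
Proof.
apply: Rle_trans (norm1_le _ _ (B2 * norm1 v * norm1 v) _) _.
  move=> i; apply: bil_le => j k.
  by case: (Hxb i _ norm1_base_le) => _ _ + _; apply.
by rewrite /quad_const; right; ring.
Qed.

Lemma norm1_xrem_le : norm1 xrem <= rem_const * norm1 v ^ 3.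
Proof.
apply: Rle_trans (norm1_le _ _ (B3 * norm1 v ^ 3 / 2) xrem_le) _.
by rewrite /rem_const; right; field.
Qed.

Lemma norm1_x_second_le :
  norm1 (vadd (vscale (/ 2) xquad) xrem) <= xdev_const * norm1 v ^ 2.
Proof.
have nv := norm1_ge0 _ v.
apply: Rle_trans (norm1_add _ _ _) _; rewrite norm1_scale Rabs_right; last lra.
have := norm1_xquad_le; have := norm1_xrem_le; case: expansion_consts_ge0 => _ a30 _ _ _.
have : norm1 v ^ 3 <= rho * norm1 v ^ 2.
  have -> : norm1 v ^ 3 = norm1 v * norm1 v ^ 2 by ring.
  by apply: Rmult_le_compat_r => //; exact: pow_le.
rewrite /xdev_const; nra.
Qed.

Lemma x_first_order : norm1 (vsub (vsub (x t (vadd z0 v)) (x t z0)) (mulmv (J t z0) v))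
  <= xdev_const * norm1 v ^ 2.
Proof.
have -> : vsub (vsub (x t (vadd z0 v)) (x t z0)) (mulmv (J t z0) v)
          = vadd (vscale (/ 2) xquad) xrem.
  by apply: functional_extensionality => i; rewrite /xrem /vscale /vadd /vsub; ring.
exact: norm1_x_second_le.
Qed.

Lemma norm1_ydiff_le : norm1 ydiff <= ydiff_const * norm1 v.
Proof.
have nv := norm1_ge0 _ v.
rewrite ydiff_expand norm1_opp; apply: Rle_trans (norm1_add _ _ _) _.
have := norm1_Jv_le; have := norm1_x_second_le; case: expansion_consts_ge0 => _ _ cD0 _ _.
have : norm1 v ^ 2 <= rho * norm1 v.
  have -> : norm1 v ^ 2 = norm1 v * norm1 v by ring.
  exact: Rmult_le_compat_r.
rewrite /ydiff_const; nra.
Qed.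

Lemma norm1_ydiff_le_B0 : norm1 ydiff <= 2 * INR n * B0.
Proof.
have bound z : norm1 z <= LZ + rho -> norm1 (x t z) <= INR n * B0.
  move=> hz; apply: norm1_le => i; rewrite -Egx //.
  have hq : norm1 (vcons t z) <= T + LZ + rho by rewrite norm1_vcons Rabs_right; lra.
  by case: (Hxb i _ hq).
apply: Rle_trans (norm1_sub _ _ _) _.
have := bound z0 ltac:(have := norm1_ge0 _ v; lra).
have := bound (vadd z0 v) ltac:(have := norm1_add _ z0 v; lra).
lra.
Qed.

Definition jet_pt : vec (n + n).+1 := vcons t (vpack vzero z0).
Definition dir_exact : vec (n + n).+1 := vcons 0 (vpack ydiff v).
Definition dir_linear : vec (n + n).+1 := vcons 0 (vpack (vscale (-1) (mulmv (J t z0) v)) v).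
Definition hess_phi : mat (n + n).+1 := fun k l => gp2 k l jet_pt.

Lemma norm1_jet_segment_le s : 0 <= s <= 1 ->
  norm1 (vadd jet_pt (vscale s dir_exact)) <= T + 2 * INR n * B0 + LZ + rho.
Proof.
move=> Hs; have := norm1_ydiff_le_B0; have := norm1_ge0 _ ydiff; have := norm1_ge0 _ v.
rewrite /jet_pt /dir_exact vcons_pack_add_scale norm1_vcons norm1_vpack norm1_scale
  Rabs_right; last lra.
rewrite Rabs_right; last lra.
have := norm1_add _ z0 (vscale s v); rewrite norm1_scale Rabs_right; last lra.
move=> h1 h2 h3 h4.
have : s * norm1 ydiff <= 1 * norm1 ydiff by apply: Rmult_le_compat_r; lra.
have : s * norm1 v <= 1 * norm1 v by apply: Rmult_le_compat_r; lra.
lra.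
Qed.

Lemma norm1_jet_le : norm1 jet_pt <= T + 2 * INR n * B0 + LZ + rho.
Proof.
have := norm1_jet_segment_le 0 ltac:(lra).
by rewrite (_ : vadd jet_pt (vscale 0 dir_exact) = jet_pt) //; vext; ring.
Qed.

Lemma phi_taylor :
  Rabs (phi t ydiff (vadd z0 v) - phi t vzero z0 - dot (fun k => gp1 k jet_pt) dir_exact
        - / 2 * bil hess_phi dir_exact dir_exact) <= BP3 * norm1 dir_exact ^ 3 / 2.
Proof.
have := taylor2_vec gp gp1 gp2 gp3 jet_pt dir_exact BP3 Cp.
rewrite {1}/jet_pt {1}/dir_exact vcons_pack_add !Egp // !vfst_pack !vsnd_pack.
by apply=> s Hs; case: (Hpb _ (norm1_jet_segment_le s Hs)) => _ _ _.
Qed.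

Lemma partial_phi_y i : gp1 (lift ord0 (lshift n i)) jet_pt = gy t z0 i.
Proof.
have [_ [P1 _]] := Cp; apply: (is_partial_unique _ _ _ _ _ (P1 _)).
apply: derivable_pt_lim_ext (Hgy t z0 i Ht) => h.
by rewrite /jet_pt -vcons_pack_shiftl Egp // vfst_pack vsnd_pack.
Qed.

Lemma partial_phi_z i : gp1 (lift ord0 (rshift n i)) jet_pt = gz t z0 i.
Proof.
have [_ [P1 _]] := Cp; apply: (is_partial_unique _ _ _ _ _ (P1 _)).
apply: derivable_pt_lim_ext (Hgz t z0 i Ht) => h.
by rewrite /jet_pt -vcons_pack_shiftr Egp // vfst_pack vsnd_pack.
Qed.

(* (P6) cancels the first-order term: [gz . v = gy . (J v)]. *)
Lemma phi_linear_term :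
  dot (fun k => gp1 k jet_pt) dir_exact = - (/ 2 * dot (gy t z0) xquad) - dot (gy t z0) xrem.
Proof.
rewrite /dir_exact dot_vcons dot_vpack Rmult_0_r Rplus_0_l.
rewrite (_ : (fun i => gp1 (lift ord0 (lshift n i)) jet_pt) = gy t z0); last first.
  by apply: functional_extensionality => i; exact: partial_phi_y.
rewrite (_ : (fun i => gp1 (lift ord0 (rshift n i)) jet_pt) = gz t z0); last first.
  by apply: functional_extensionality => i; exact: partial_phi_z.
have -> : dot (gz t z0) v = dot (gy t z0) (mulmv (J t z0) v).
  rewrite dot_mulmv; congr (dot _ v); apply: functional_extensionality => j.
  by rewrite -Hgzy.
by rewrite ydiff_expand dot_scaler !dot_addr dot_scaler; ring.
Qed.

Lemma qform_expansion_mx :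
  qform (expansion_mx t z0) v = bil hess_phi dir_linear dir_linear - dot (gy t z0) xquad.
Proof.
rewrite qform_bil /expansion_mx bil_subm bil_sum; congr (_ - _).
apply: esym; apply: bil_comp => k; rewrite /dir_linear /variation_mx.
elim/ord_cons_ind: k => [|k]; rewrite ?vcons_0 ?vcons_lift.
  by rewrite big1 // => j _; rewrite vcons_0; ring.
elim/ord_pack_ind: k => k; rewrite ?vpack_l ?vpack_r.
  rewrite /vscale /mulmv big_distrr; apply: eq_bigr => j _.
  by rewrite vcons_lift vpack_l /=; ring.
by rewrite -{1}(sum_basisl _ v k); apply: eq_bigr => j _; rewrite vcons_lift vpack_r.
Qed.

Lemma bil_hess_phi_le :
  Rabs (bil hess_phi dir_exact dir_exact - bil hess_phi dir_linear dir_linear)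
    <= BH * xdev_const * (ydiff_const + 1 + (Jv_const + 1)) * norm1 v ^ 3.
Proof.
case: expansion_consts_ge0 => a10 _ cD0 cy0 _; case: Hpos' => _ BH0 _.
have nv := norm1_ge0 _ v.
have [_ _ HBH _] := Hpb _ norm1_jet_le.
apply: Rle_trans (bil_sub_diag_le _ _ _ _ BH HBH) _.
have Ediff : vsub dir_exact dir_linear =
             vcons 0 (vpack (vscale (-1) (vadd (vscale (/ 2) xquad) xrem)) vzero).
  rewrite /dir_exact /dir_linear ydiff_expand; vsolve.
have hdiff : norm1 (vsub dir_exact dir_linear) <= xdev_const * norm1 v ^ 2.
  rewrite Ediff norm1_vcons norm1_vpack norm1_opp norm1_zero Rabs_R0.
  have := norm1_x_second_le; lra.
have hW : norm1 dir_exact <= (ydiff_const + 1) * norm1 v.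
  by rewrite /dir_exact norm1_vcons norm1_vpack Rabs_R0; have := norm1_ydiff_le; lra.
have hW' : norm1 dir_linear <= (Jv_const + 1) * norm1 v.
  by rewrite /dir_linear norm1_vcons norm1_vpack norm1_opp Rabs_R0; have := norm1_Jv_le; lra.
have := Rmult_le_compat _ _ _ _ (norm1_ge0 _ _)
  (Rplus_le_le_0_compat _ _ (norm1_ge0 _ _) (norm1_ge0 _ _)) hdiff (Rplus_le_compat _ _ _ _ hW hW').
move/(Rmult_le_compat_l BH _ _ BH0) => h.
rewrite Rmult_assoc; apply: Rle_trans h _; right; ring.
Qed.

Lemma phi_expansion :
  Rabs (phi t ydiff (vadd z0 v) - (phi t vzero z0 + / 2 * qform (expansion_mx t z0) v))
    <= expansion_const * norm1 v ^ 3.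
Proof.
case: expansion_consts_ge0 => _ a30 _ cy0 _; case: Hpos' => BD0 _ BP30.
have nv := norm1_ge0 _ v.
have -> : phi t ydiff (vadd z0 v) - (phi t vzero z0 + / 2 * qform (expansion_mx t z0) v)
  = (phi t ydiff (vadd z0 v) - phi t vzero z0 - dot (fun k => gp1 k jet_pt) dir_exact
       - / 2 * bil hess_phi dir_exact dir_exact)
    - dot (gy t z0) xrem
    + / 2 * (bil hess_phi dir_exact dir_exact - bil hess_phi dir_linear dir_linear).
  by rewrite qform_expansion_mx phi_linear_term; ring.
have h1 := phi_taylor.
have h2 : Rabs (dot (gy t z0) xrem) <= BD * (rem_const * norm1 v ^ 3).
  apply: Rle_trans (dot_le _ _ _ BD _) _.
    by move=> i; rewrite -partial_phi_y; case: (Hpb _ norm1_jet_le) => _ + _ _; apply.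
  by apply: Rmult_le_compat_l => //; exact: norm1_xrem_le.
have h3 := bil_hess_phi_le.
have h4 : BP3 * norm1 dir_exact ^ 3 / 2 <= BP3 / 2 * (ydiff_const + 1) ^ 3 * norm1 v ^ 3.
  have : norm1 dir_exact ^ 3 <= ((ydiff_const + 1) * norm1 v) ^ 3.
    apply: pow_incr; split; first exact: norm1_ge0.
    by rewrite /dir_exact norm1_vcons norm1_vpack Rabs_R0; have := norm1_ydiff_le; lra.
  move/(Rmult_le_compat_l (BP3 / 2) _ _ ltac:(lra)); rewrite Rpow_mult_distr; lra.
set X := _ - _ - _ - _ in h1 *; set C := _ - _ in h3 *.
have -> : expansion_const * norm1 v ^ 3 = BD * (rem_const * norm1 v ^ 3)
  + / 2 * (BH * xdev_const * (ydiff_const + 1 + (Jv_const + 1)) * norm1 v ^ 3)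
  + BP3 / 2 * (ydiff_const + 1) ^ 3 * norm1 v ^ 3 by rewrite /expansion_const; ring.
have := Rabs_triang (X + - dot (gy t z0) xrem) (/ 2 * C).
have := Rabs_triang X (- dot (gy t z0) xrem).
rewrite Rabs_Ropp Rabs_mult (Rabs_right (/ 2)); last lra.
rewrite /Rminus; lra.
Qed.

End AtPoint.
End LocalExpansion.

Lemma local_expansion n T (x : R -> vec n -> vec n) (J : R -> vec n -> mat n)
  (phi : R -> vec n -> vec n -> R) (gy gz : R -> vec n -> vec n) LZ rho :
  0 <= rho ->
  (forall i, smooth_strip T (fun t z => x t z i)) ->
  smooth_strip T (fun t (w : vec (n + n)) => phi t (vfst w) (vsnd w)) ->
  (forall t z (i j : 'I_n), 0 <= t <= T ->
     derivable_pt_lim (fun h => x t (vadd z (vscale h (basis j))) i) 0 (J t z i j)) ->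
  (forall t z (j : 'I_n), 0 <= t <= T ->
     derivable_pt_lim (fun h => phi t (vscale h (basis j)) z) 0 (gy t z j)) ->
  (forall t z (j : 'I_n), 0 <= t <= T ->
     derivable_pt_lim (fun h => phi t vzero (vadd z (vscale h (basis j)))) 0 (gz t z j)) ->
  (forall t z (j : 'I_n), 0 <= t <= T ->
     \big[Rplus/0]_(i < n) (J t z i j * gy t z i) = gz t z j) ->
  exists R3 Cx (A : R -> vec n -> mat n), 0 <= R3 /\ 0 <= Cx /\
    forall t z0 v, 0 <= t <= T -> norm1 z0 <= LZ -> norm1 v <= rho ->
      Rabs (phi t (vsub (x t z0) (x t (vadd z0 v))) (vadd z0 v)
              - (phi t vzero z0 + / 2 * qform (A t z0) v)) <= R3 * norm1 v ^ 3 /\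
      norm1 (vsub (vsub (x t (vadd z0 v)) (x t z0)) (mulmv (J t z0) v)) <= Cx * norm1 v ^ 2.
Proof.
move=> Hrho Hx Hphi HJ Hgy Hgz Hgzy.
have [gx [gx1 [gx2 [gx3 Hgx]]]] := smooth_strip_C3_family T _ Hx.
have Egx i t z : 0 <= t <= T -> gx i (vcons t z) = x t z i := proj1 (Hgx i) t z.
have Cx i := proj2 (Hgx i).
have [gp [gp1 [gp2 [gp3 [Egp Cp]]]]] := smooth_strip_C3 T _ Hphi.
have [B0 [B1 [B2 [B3 [[B00 B10 B20 B30] Hxb]]]]] :=
  C3_partials_bounded_family gx gx1 gx2 gx3 (T + LZ + rho) Cx.
have [BP0 [BD [BH [BP3 [[_ BD0 BH0 BP30] Hpb]]]]] :=
  C3_partials_bounded gp gp1 gp2 gp3 (T + 2 * INR n * B0 + LZ + rho) Cp.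
have Hpos : [/\ 0 <= B0, 0 <= B1, 0 <= B2, 0 <= B3 & 0 <= rho] by [].
have Hpos' : [/\ 0 <= BD, 0 <= BH & 0 <= BP3] by [].
have [_ _ HCx _ HR3] := expansion_consts_ge0 n rho B0 B1 B2 B3 BD BH BP3 Hpos Hpos'.
exists (expansion_const n rho B1 B2 B3 BD BH BP3), (xdev_const n rho B2 B3),
  (expansion_mx n J gy gx2 gp2).
split; [exact: HR3 | split; first exact: HCx].
move=> t z0 v Ht Hz0 Hv; split.
- exact: (phi_expansion n T LZ rho x J phi gy gz HJ Hgy Hgz Hgzy gx gx1 gx2 gx3 Egx Cx
    gp gp1 gp2 gp3 Egp Cp B0 B1 B2 B3 BP0 BD BH BP3 Hxb Hpb Hpos Hpos').
- exact: (x_first_order n T LZ rho x J HJ gx gx1 gx2 gx3 Egx Cx B0 B1 B2 B3 BD BH BP3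
    Hxb Hpos Hpos').
Qed.

(** * Coercivity of the imaginary part *)

Lemma le_of_forall_small (X Y K M c : R) : 0 < c -> 0 <= M ->
  (forall s, 0 < s <= 1 -> s * M <= c -> Y - s * K <= X) -> Y <= X.
Proof.
move=> hc hM H; apply: Rnot_lt_le => hlt.
have hK := Rabs_pos K; have hKl := Rle_abs K.
have hq1 : 0 < c / (M + 1) by apply: Rdiv_lt_0_compat; lra.
have hq2 : 0 < (Y - X) / (2 * (Rabs K + 1)) by apply: Rdiv_lt_0_compat; lra.
pose s := Rmin 1 (Rmin (c / (M + 1)) ((Y - X) / (2 * (Rabs K + 1)))).
have hs0 : 0 < s by apply: Rmin_pos; [lra | apply: Rmin_pos].
have hs1 : s <= 1 by exact: Rmin_l.
have hs2 : s <= c / (M + 1) by apply: Rle_trans (Rmin_r _ _) (Rmin_l _ _).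
have hs3 : s <= (Y - X) / (2 * (Rabs K + 1)) by apply: Rle_trans (Rmin_r _ _) (Rmin_r _ _).
have hsM : s * M <= c.
  have := Rmult_le_compat_r (M + 1) _ _ ltac:(lra) hs2.
  by rewrite /Rdiv Rmult_assoc Rinv_l ?Rmult_1_r; nra.
have hsK : s * (Rabs K + 1) <= (Y - X) / 2.
  have := Rmult_le_compat_r (Rabs K + 1) _ _ ltac:(lra) hs3.
  by rewrite (_ : (Y - X) / (2 * (Rabs K + 1)) * (Rabs K + 1) = (Y - X) / 2) //; field; lra.
have := H s (conj hs0 hs1) hsM; nra.
Qed.

Lemma vnorm_perturb_sqr_ge n (u e : vec n) s K : 0 <= s -> norm1 e <= K ->
  s ^ 2 * vnorm u ^ 2 - 2 * (s * norm1 u * K) <= vnorm (vscale (-1) (vadd (vscale s u) e)) ^ 2.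
Proof.
move=> hs he; rewrite -!dot_vnorm dot_scale_diag (_ : (-1) ^ 2 = 1) ?Rmult_1_l; last by ring.
apply: Rle_trans (dot_add_diag_ge _ _ _).
rewrite dot_scale_diag norm1_scale Rabs_right; last lra.
have : s * norm1 u * norm1 e <= s * norm1 u * K.
  by apply: Rmult_le_compat_l => //; apply: Rmult_le_pos => //; exact: norm1_ge0.
lra.
Qed.

Lemma expansion_quadratic_lower_bound n (Phi : vec n -> vec n -> R) (xt : vec n -> vec n)
  (Jm A : mat n) (z0 : vec n) w4 R3 Cx rho r E :
  0 < w4 -> 0 < rho -> 0 < r -> 0 < E -> 0 <= Cx -> Phi vzero z0 = 0 ->
  (forall v, norm1 v <= rho ->
     Rabs (Phi (vsub (xt z0) (xt (vadd z0 v))) (vadd z0 v) - (Phi vzero z0 + / 2 * qform A v))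
       <= R3 * norm1 v ^ 3 /\
     norm1 (vsub (vsub (xt (vadd z0 v)) (xt z0)) (mulmv Jm v)) <= Cx * norm1 v ^ 2) ->
  (forall z y, vnorm (vsub z z0) <= r -> vnorm y <= E -> w4 * vnorm y ^ 2 <= Phi y z) ->
  forall v, w4 * vnorm (mulmv Jm v) ^ 2 <= / 2 * qform A v.
Proof.
move=> Hw4 Hrho Hr HE HCx HPhi0 Hexp HP4 v.
set q := qform A v; set a := vnorm (mulmv Jm v).
set N1 := norm1 v; set NJ := norm1 (mulmv Jm v).
have HN1 : 0 <= N1 := norm1_ge0 _ v; have HNJ : 0 <= NJ := norm1_ge0 _ _.
have HCN : 0 <= Cx * N1 ^ 2 by apply: Rmult_le_pos => //; exact: pow2_ge_0.
apply: (le_of_forall_small (/ 2 * q) (w4 * a ^ 2) (2 * w4 * (Cx * N1 ^ 2) * NJ + R3 * N1 ^ 3)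
  (N1 + (NJ + Cx * N1 ^ 2)) (Rmin rho (Rmin r E))); try lra.
  by apply: Rmin_pos => //; exact: Rmin_pos.
move=> s [hs hs1] hsM.
have hrho := Rmin_l rho (Rmin r E); have hr := Rle_trans _ _ _ (Rmin_r rho _) (Rmin_l r E).
have hE := Rle_trans _ _ _ (Rmin_r rho _) (Rmin_r r E).
have HsN1 : norm1 (vscale s v) = s * N1 by rewrite norm1_scale Rabs_right //; lra.
have [Hg Hxu] := Hexp (vscale s v) ltac:(rewrite HsN1; nra).
rewrite HPhi0 qform_scale -/q HsN1 Rplus_0_l in Hg.
rewrite HsN1 mulmv_scale in Hxu.
set y := vsub (xt z0) (xt (vadd z0 (vscale s v))) in Hg.
set e := vsub (vsub _ _) _ in Hxu.
have Ey : y = vscale (-1) (vadd (vscale s (mulmv Jm v)) e).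
  by rewrite /y /e; vext; ring.
have HsJ : norm1 (vscale s (mulmv Jm v)) = s * NJ by rewrite norm1_scale Rabs_right //; lra.
have Hes : norm1 e <= s * (Cx * N1 ^ 2).
  apply: Rle_trans Hxu _; have : s * s <= s by nra.
  have -> : Cx * (s * N1) ^ 2 = (Cx * N1 ^ 2) * (s * s) by ring.
  nra.
have Hny : vnorm y <= E.
  apply: Rle_trans (vnorm_le_norm1 _ _) _; rewrite Ey norm1_opp.
  apply: Rle_trans (norm1_add _ _ _) _; nra.
have Hz : vnorm (vsub (vadd z0 (vscale s v)) z0) <= r.
  by rewrite vsub_vadd_l; apply: Rle_trans (vnorm_le_norm1 _ _) _; nra.
have HP := HP4 _ _ Hz Hny.
have Hlow := vnorm_perturb_sqr_ge _ (mulmv Jm v) _ s _ (Rlt_le _ _ hs) Hxu.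
rewrite -Ey -/a -/NJ in Hlow.
have Hup : Phi y (vadd z0 (vscale s v)) <= / 2 * (s ^ 2 * q) + R3 * (s * N1) ^ 3.
  by move: Hg; split_Rabs; lra.
apply: (Rmult_le_reg_l (s ^ 2)); first exact: pow_lt.
have := Rmult_le_compat_l _ _ _ (Rlt_le _ _ Hw4) Hlow.
have -> : s ^ 2 * (w4 * a ^ 2 - s * (2 * w4 * (Cx * N1 ^ 2) * NJ + R3 * N1 ^ 3))
  = w4 * (s ^ 2 * a ^ 2 - 2 * (s * NJ * (Cx * (s * N1) ^ 2))) - R3 * (s * N1) ^ 3 by ring.
lra.
Qed.

Lemma inv_norm_le_vnorm n (M : mat n) Rb v :
  inv_norm_le M Rb -> vnorm v <= Rb * vnorm (mulmv M v).
Proof. by move=> [Minv [HL [_ Hb]]]; have := Hb (mulmv M v); rewrite -mulmv_mmul HL mulmv_id. Qed.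

Lemma coercive_of_lower_bound w4 Rb a q nv :
  0 < w4 -> 0 <= a -> 0 <= nv -> nv <= Rb * a -> w4 * a ^ 2 <= / 2 * q ->
  2 * w4 / (Rb ^ 2 + 1) * nv ^ 2 <= q.
Proof.
move=> Hw4 Ha Hnv Hle Hq.
have hR : 0 < Rb ^ 2 + 1 by have := pow2_ge_0 Rb; lra.
have h1 : nv ^ 2 <= (Rb ^ 2 + 1) * a ^ 2.
  have : nv ^ 2 <= (Rb * a) ^ 2 by apply: pow_incr; lra.
  by rewrite Rpow_mult_distr; have := pow2_ge_0 a; nra.
have -> : 2 * w4 / (Rb ^ 2 + 1) * nv ^ 2 = 2 * w4 * (nv ^ 2 / (Rb ^ 2 + 1)) by field; lra.
have : nv ^ 2 / (Rb ^ 2 + 1) <= a ^ 2.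
  apply: (Rmult_le_reg_r (Rb ^ 2 + 1)) => //.
  by rewrite /Rdiv Rmult_assoc Rinv_l ?Rmult_1_r; lra.
move=> h2; have := Rmult_le_compat_l (2 * w4) _ _ ltac:(lra) h2; lra.
Qed.

Lemma qform_coercive n (Phi : vec n -> vec n -> R) (xt : vec n -> vec n)
  (Jm A : mat n) (z0 : vec n) w4 R3 Cx rho r E Rb :
  0 < w4 -> 0 < rho -> 0 < r -> 0 < E -> 0 <= Cx -> Phi vzero z0 = 0 ->
  (forall v, norm1 v <= rho ->
     Rabs (Phi (vsub (xt z0) (xt (vadd z0 v))) (vadd z0 v) - (Phi vzero z0 + / 2 * qform A v))
       <= R3 * norm1 v ^ 3 /\
     norm1 (vsub (vsub (xt (vadd z0 v)) (xt z0)) (mulmv Jm v)) <= Cx * norm1 v ^ 2) ->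
  (forall z y, vnorm (vsub z z0) <= r -> vnorm y <= E -> w4 * vnorm y ^ 2 <= Phi y z) ->
  inv_norm_le Jm Rb ->
  forall v, qform A v >= 2 * w4 / (Rb ^ 2 + 1) * vnorm v ^ 2.
Proof.
move=> Hw4 Hrho Hr HE HCx HPhi0 Hexp HP4 Hinv v; apply: Rle_ge.
apply: (coercive_of_lower_bound _ _ (vnorm (mulmv Jm v)) _ _ Hw4 (vnorm_ge0 _ _)
  (vnorm_ge0 _ _) (inv_norm_le_vnorm _ _ _ _ Hinv)).
exact: (expansion_quadratic_lower_bound n Phi xt Jm A z0 w4 R3 Cx rho r E Hw4 Hrho Hr HE HCx
  HPhi0 Hexp HP4).
Qed.

Lemma inK_norm1_le n (K0 : vec n -> Prop) d'' LK z :
  (forall k, K0 k -> norm1 k <= LK) -> inK K0 d'' z -> norm1 z <= LK + INR n * (d'' + 1).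
Proof.
move=> HLK Hz; have [k [Hk Hzk]] := Hz 1 Rlt_0_1.
have := norm1_le_vnorm _ (vsub z k); have := norm1_add _ (vsub z k) k.
rewrite vadd_vsubK; have := HLK k Hk.
have : INR n * vnorm (vsub z k) <= INR n * (d'' + 1) by apply: Rmult_le_compat_l;
  [exact: pos_INR | lra].
lra.
Qed.

Lemma within_eta_ball n (eta : option R) : (forall e, eta = Some e -> 0 < e) ->
  exists E, 0 < E /\ forall y : vec n, vnorm y <= E -> within_eta eta y.
Proof.
case: eta => [e|] He; last by exists 1; split => //; lra.
by exists (2 * e); split => //; have := He e erefl; lra.
Qed.

Lemma cabs_cubic_le n (v : vec n) a b R1 R2 : 0 <= R1 -> 0 <= R2 ->
  Rabs a <= R1 * norm1 v ^ 3 -> Rabs b <= R2 * norm1 v ^ 3 ->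
  cabs a b <= (R1 + R2) * INR n ^ 3 * vnorm v ^ 3.
Proof.
move=> H1 H2 Ha Hb; apply: Rle_trans (cabs_le _ _) _.
have hp : norm1 v ^ 3 <= INR n ^ 3 * vnorm v ^ 3.
  by rewrite -Rpow_mult_distr; apply: pow_incr; split; [exact: norm1_ge0 | exact: norm1_le_vnorm].
have := Rmult_le_compat_l _ _ _ H1 hp; have := Rmult_le_compat_l _ _ _ H2 hp.
lra.
Qed.

Theorem lemma6p10 (n : nat) (T d : R) (K0 : vec n -> Prop) (eta : option R)
  (x : R -> vec n -> vec n) (PhiRe PhiIm : R -> vec n -> vec n -> R)
  (J : R -> vec n -> mat n)
  (gyRe gyIm : R -> vec n -> vec n) (gzRe gzIm : R -> vec n -> vec n)
  (C w4 delta r Rm1 : R) :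
  (1 <= n)%nat -> 0 < T -> seq_compact K0 -> 0 < d ->
  (forall e, eta = Some e -> 0 < e) ->
  (* (P1) *)
  (forall i : 'I_n, smooth_strip T (fun t z => x t z i)) ->
  (* (P2) : Phi = PhiRe + i PhiIm *)
  smooth_strip T (fun t (w : vec (n + n)) => PhiRe t (vfst w) (vsnd w)) ->
  smooth_strip T (fun t (w : vec (n + n)) => PhiIm t (vfst w) (vsnd w)) ->
  (* J t z = D_z x(t,z) *)
  (forall t z (i j : 'I_n), 0 <= t <= T ->
     derivable_pt_lim (fun h => x t (vadd z (vscale h (basis j))) i) 0 (J t z i j)) ->
  (* gyRe + i gyIm = nabla_y Phi(t,0,z) *)
  (forall t z (j : 'I_n), 0 <= t <= T ->
     derivable_pt_lim (fun h => PhiRe t (vscale h (basis j)) z) 0 (gyRe t z j) /\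
     derivable_pt_lim (fun h => PhiIm t (vscale h (basis j)) z) 0 (gyIm t z j)) ->
  (* gzRe + i gzIm = nabla_z [Phi(t,0,z)] *)
  (forall t z (j : 'I_n), 0 <= t <= T ->
     derivable_pt_lim (fun h => PhiRe t vzero (vadd z (vscale h (basis j)))) 0 (gzRe t z j) /\
     derivable_pt_lim (fun h => PhiIm t vzero (vadd z (vscale h (basis j)))) 0 (gzIm t z j)) ->
  (* (P3) *)
  0 < C ->
  (forall t z, 0 <= t <= T -> inK K0 d z -> forall j, gyIm t z j = 0) ->
  (forall t z z', 0 <= t <= T -> inK K0 d z -> inK K0 d z' ->
     cvnorm (vsub (gyRe t z) (gyRe t z')) (vsub (gyIm t z) (gyIm t z'))
       + vnorm (vsub (x t z) (x t z')) >= C * vnorm (vsub z z')) ->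
  (* (P4) *)
  0 < w4 ->
  (forall t y z, 0 <= t <= T -> inK K0 d z -> within_eta eta y ->
     PhiIm t y z >= w4 * (vnorm y) ^ 2) ->
  (* (P6) *)
  (forall t z, 0 <= t <= T ->
     PhiIm t vzero z = 0 /\ (forall j, gyIm t z j = 0) /\
     (forall j : 'I_n,
        \big[Rplus/0]_(i < n) (J t z i j * gyRe t z i) = gzRe t z j /\
        0 = gzIm t z j)) ->
  0 < delta ->
  0 < r -> r <= d / 2 ->
  (forall t z0, in_Kbar T K0 d x J delta t z0 ->
     (forall z, vnorm (vsub z z0) <= r -> inK K0 d z) /\
     (forall z, vnorm (vsub z z0) < r -> inv_norm_le (J t z) Rm1)) ->
  exists (R3 wa : R) (ARe AIm : R -> vec n -> mat n),
    0 < wa /\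
    forall t z0, in_Kbar T K0 d x J delta t z0 ->
      mat_symmetric (AIm t z0) /\
      (forall v, qform (AIm t z0) v >= wa * (vnorm v) ^ 2) /\
      (forall z, vnorm (vsub z z0) < r / 2 ->
         let y0 := x t z0 in
         cabs (PhiRe t (vsub y0 (x t z)) z
                 - (PhiRe t vzero z0 + / 2 * qform (ARe t z0) (vsub z z0)))
              (PhiIm t (vsub y0 (x t z)) z
                 - (PhiIm t vzero z0 + / 2 * qform (AIm t z0) (vsub z z0)))
         <= R3 * (vnorm (vsub z z0)) ^ 3).
Proof.
move=> Hn _ HK0 _ Heta Hx HRe HIm HJ Hgy Hgz _ _ _ Hw4 HP4 HP6 _ Hr _ Hball.
have [LK HLK] := seq_compact_bounded _ K0 HK0.
set LZ := LK + INR n * (d / 2 + 1); set rho := INR n * (r / 2).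
have Hrho : 0 < rho by apply: Rmult_lt_0_compat; [apply: (lt_INR 0); apply/ltP | lra].
have Hgzy_im t z j : 0 <= t <= T ->
    \big[Rplus/0]_(i < n) (J t z i j * gyIm t z i) = gzIm t z j.
  move=> Ht; have [_ [Hy Hz]] := HP6 t z Ht.
  by rewrite -(proj2 (Hz j)) big1 // => i _; rewrite Hy Rmult_0_r.
have [R3r [Cxr [Ar [R3r0 [_ HexpRe]]]]] := local_expansion n T x J PhiRe gyRe gzRe LZ rho
  (Rlt_le _ _ Hrho) Hx HRe HJ (fun t z j Ht => proj1 (Hgy t z j Ht))
  (fun t z j Ht => proj1 (Hgz t z j Ht)) (fun t z j Ht => proj1 (proj2 (proj2 (HP6 t z Ht)) j)).
have [R3i [Cxi [Ai [R3i0 [Cxi0 HexpIm]]]]] := local_expansion n T x J PhiIm gyIm gzIm LZ rho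
  (Rlt_le _ _ Hrho) Hx HIm HJ (fun t z j Ht => proj2 (Hgy t z j Ht))
  (fun t z j Ht => proj2 (Hgz t z j Ht)) Hgzy_im.
have [E [HE HEeta]] := within_eta_ball n eta Heta.
exists ((R3r + R3i) * INR n ^ 3), (2 * w4 / (Rm1 ^ 2 + 1)), Ar,
  (fun t z0 j k => (Ai t z0 j k + Ai t z0 k j) / 2).
split; first by apply: Rdiv_lt_0_compat; [lra | have := pow2_ge_0 Rm1; lra].
move=> t z0 HKb; have [[Ht /(inK_norm1_le _ _ _ _ _ HLK) HZ] _] := HKb.
have [Hin Hinv] := Hball t z0 HKb.
split; [by move=> j k; rewrite Rplus_comm | split => [v | z Hz /=]]; rewrite qform_symmetrize.
  apply: (qform_coercive n (PhiIm t) (x t) (J t z0) (Ai t z0) z0 w4 R3i Cxi rho r E) => //.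
  - exact: (proj1 (HP6 t z0 Ht)).
  - by move=> u Hu; exact: HexpIm.
  - by move=> z y Hzr Hy; apply/Rge_le/HP4 => //; [exact: Hin | exact: HEeta].
  - by apply: Hinv; rewrite vsub_diag vnorm_zero.
have Hv : norm1 (vsub z z0) <= rho.
  by apply: Rle_trans (norm1_le_vnorm _ _) _; apply: Rmult_le_compat_l; [exact: pos_INR | lra].
have [Hre _] := HexpRe t z0 _ Ht HZ Hv; have [Him _] := HexpIm t z0 _ Ht HZ Hv.
by rewrite vadd_vsub in Hre Him; exact: cabs_cubic_le.
Qed.
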